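(* Under the Simple Resonance Assumption below, let $(\hat{\mathbf E},\hat\psi)$ be the Rellich pair of $H^{\hat\Lambda}$ on $B_{\rho/8D_0}(\theta_* )$ whose eigenvalue is the unique eigenvalue of $H^{\hat\Lambda}(\theta)$ in $B_{3\rho/2}(E_* )$ (with sign of $\hat\psi$ chosen so that $\|\hat\psi-\psi\|\le3\delta/\rho$). Then there is a constant $C$ depending only on $D_0$ (e.g. $C=500D_0^2$) such that, uniformly for $\theta\in B_{\rho/8D_0}(\theta_* )$, $$|\partial_\theta^k(\hat{\mathbf E}-\mathbf E)|\le C\frac{\delta}{\rho^k},\ 0\le k\le2,\qquad \|\partial^k_\theta(\hat\psi-\psi)\|\le C\frac{\delta}{\rho^{k+1}},\ 0\le k\le1.$$
   Context: Setting: $v\in C^2(\mathbb{T},[-1,1])$ with $\|\partial_\theta v\|_\infty+\|\partial^2_\theta v\|_\infty\le D_0$, $\alpha$ irrational, $V_n(\theta)=v(\theta+n\alpha)$, $0<\varepsilon<1/7$, $(\theta_*,E_* )\in\mathbb{T}\times[-2,2]$. $H^\Lambda(\theta)$ is the Dirichlet restriction to a finite interval $\Lambda\subset\mathbb{Z}$ of $(H\psi)(n)=\varepsilon(\psi(n+1)+\psi(n-1))+V_n(\theta)\psi(n)$; vectors on subintervals are extended by zero. For a partition $\mathcal P$ of $\hat\Lambda$ into consecutive intervals $\Lambda_j$: $H^{\hat\Lambda}_{\mathcal P}=\bigoplus H^{\Lambda_j}$, $\Gamma^{\hat\Lambda}_{\mathcal P}=H^{\hat\Lambda}-H^{\hat\Lambda}_{\mathcal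 P}$. A Rellich pair is a $C^2$ family of simple eigenvalues with unit eigenvectors. $R_\perp(E;A,S)=\sum_{\lambda_j\notin S}\chi_{\{\lambda_j\}}(A)/(\lambda_j-E)$; $R^\Lambda_{\theta,E}=(H^\Lambda(\theta)-E)^{-1}$. Simple Resonance Assumption: $\hat\Lambda$ is a finite interval with core subinterval $\Lambda$, shoulders $\Lambda_l,\Lambda_r$ (components of $\hat\Lambda\setminus\Lambda$), partition $\mathcal P=\Lambda_l\cup\Lambda\cup\Lambda_r$. Constants satisfy $\delta<\rho^3/2<\rho/16$, $\log7<\gamma\le|\log\varepsilon|$, $\ell>0$. For all $|\theta-\theta_*|<\rho/(8D_0)$: (1) $H^\Lambda(\theta)$ has a Rellich pair $(\mathbf E,\psi)(\theta)$ with $\mathbf E(\theta_* )=E_*$; (2) $\|\Gamma^{\hat\Lambda}_{\mathcal P}\psi\|\le2\delta$, and every unit eigenvector of $H^{\hat\Lambda}(\theta)$ with eigenvalue in $B_{3\rho/2}(E_* )$ has $\|\Gamma^{\hat\Lambda}_{\mathcal P}\hat\psi\|\le4\delta$; (3) $\log|R^{\Lambda_{l/r}}_{\theta,E}(m,n)|\le-\gamma|m-n|$ for $m,n\in\Lambda_{l/r}$, $|m-n|\ge\ell$, $|E-E_*|<\frac32\rho$; (4) $\mathbf E(\theta)$ is the unique eigenvalue of $H^{\hat\Lambda}_{\mathcal P}(\theta)$ in $B_{7\rho/4}(E_* )$ and $\|R_\perp(E;H^{\hat\Lambda}_{\mathcal P}(\theta),\{\mathbf E(\theta)\})\|\le4\rho^{-1}$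 for $E\in B_{3\rho/2}(E_* )$; (5) $\|\Gamma^{\hat\Lambda}_{\mathcal P}(\partial_\theta\psi)\|\le25D_0\delta\rho^{-1}$. *)

From Stdlib Require Import Reals ZArith Lra Lia.
From Coquelicot Require Import Coquelicot.
Open Scope R_scope.

Definition inI (lo hi n : Z) : Prop := (lo <= n <= hi)%Z.
Definition inb (lo hi n : Z) : bool := (Z.leb lo n && Z.leb n hi)%bool.

(* x is supported in [lo,hi] (i.e. x is an element of l^2([lo,hi]) extended by zero) *)
Definition supp (lo hi : Z) (x : Z -> R) : Prop :=
  forall n, ~ inI lo hi n -> x n = 0.

Definition restrict (lo hi : Z) (x : Z -> R) : Z -> R :=
  fun n => if inb lo hi n then x n else 0.

Fixpoint nsum (N : nat) (f : nat -> R) : R :=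
  match N with O => 0 | S k => nsum k f + f k end.

Definition card (lo hi : Z) : nat := Z.to_nat (hi - lo + 1).

Definition zsum (lo hi : Z) (f : Z -> R) : R :=
  nsum (card lo hi) (fun k => f (lo + Z.of_nat k)%Z).

Definition inner (lo hi : Z) (x y : Z -> R) : R := zsum lo hi (fun n => x n * y n).
Definition vnorm (lo hi : Z) (x : Z -> R) : R := sqrt (zsum lo hi (fun n => x n ^ 2)).

Definition Vpot (v : R -> R) (alpha : R) (n : Z) (theta : R) : R :=
  v (theta + IZR n * alpha).

(* Dirichlet restriction H^[lo,hi](theta) of
   (H psi)(n) = eps (psi(n+1)+psi(n-1)) + V_n(theta) psi(n), acting on Z -> R
   (the input is restricted to [lo,hi], the output is extended by zero). *)
Definition Hres (v : R -> R) (alpha eps : R) (lo hi : Z) (theta : R)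
  (x : Z -> R) : Z -> R :=
  fun n => if inb lo hi n then
     eps * (restrict lo hi x (n + 1)%Z + restrict lo hi x (n - 1)%Z)
     + Vpot v alpha n theta * restrict lo hi x n
   else 0.

(* Partition of hatLambda = [a,d] into Lambda_l = [a,b-1], Lambda = [b,c],
   Lambda_r = [c+1,d]: H_P = direct sum of the three Dirichlet restrictions *)
Definition HP (v : R -> R) (alpha eps : R) (a b c d : Z) (theta : R)
  (x : Z -> R) : Z -> R :=
  fun n => Hres v alpha eps a (b - 1) theta x n + Hres v alpha eps b c theta x n
           + Hres v alpha eps (c + 1) d theta x n.

Definition GammaP (v : R -> R) (alpha eps : R) (a b c d : Z) (theta : R)
  (x : Z -> R) : Z -> R :=
  fun n => Hres v alpha eps a d theta x n - HP v alpha eps a b c d theta x n.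

Definition is_eigval (A : (Z -> R) -> (Z -> R)) (lo hi : Z) (lam : R) : Prop :=
  exists x, supp lo hi x /\ (exists n, x n <> 0) /\ forall n, A x n = lam * x n.

Definition C2_on (P : R -> Prop) (f : R -> R) : Prop :=
  forall t, P t -> ex_derive f t /\ ex_derive (Derive f) t
                   /\ continuous (Derive (Derive f)) t.

Definition RellichPair (A : R -> (Z -> R) -> (Z -> R)) (lo hi : Z)
  (P : R -> Prop) (Ef : R -> R) (psi : R -> Z -> R) : Prop :=
  C2_on P Ef /\ (forall n, C2_on P (fun t => psi t n)) /\
  forall t, P t ->
    supp lo hi (psi t) /\ vnorm lo hi (psi t) = 1 /\
    (forall n, A t (psi t) n = Ef t * psi t n) /\
    (forall x, supp lo hi x -> (forall n, A t x n = Ef t * x n) ->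
       exists c, forall n, x n = c * psi t n).

Definition onb_eig (A : (Z -> R) -> (Z -> R)) (lo hi : Z)
  (u : nat -> Z -> R) (lam : nat -> R) : Prop :=
  (forall k, (k < card lo hi)%nat ->
     supp lo hi (u k) /\ forall n, A (u k) n = lam k * u k n) /\
  (forall j k, (j < card lo hi)%nat -> (k < card lo hi)%nat ->
     inner lo hi (u j) (u k) = if Nat.eqb j k then 1 else 0).

(* R_perp(E; A, {lam0}) phi = sum_{lambda_j <> lam0} chi_{lambda_j}(A) phi / (lambda_j - E),
   written through an orthonormal eigenbasis (summing the rank-one projections of
   all basis vectors with eigenvalue lambda_j gives chi_{lambda_j}(A)). *)
Definition Rperp (lo hi : Z) (u : nat -> Z -> R) (lam : nat -> R) (lam0 E : R)
  (phi : Z -> R) : Z -> R :=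
  fun n => nsum (card lo hi) (fun k =>
     if Req_EM_T (lam k) lam0 then 0
     else inner lo hi (u k) phi / (lam k - E) * u k n).

Definition Rperp_norm_le (A : (Z -> R) -> (Z -> R)) (lo hi : Z) (lam0 E M : R) : Prop :=
  forall u lam, onb_eig A lo hi u lam ->
  forall phi, supp lo hi phi ->
    vnorm lo hi (Rperp lo hi u lam lam0 E phi) <= M * vnorm lo hi phi.

Definition deltaZ (m : Z) : Z -> R := fun k => if Z.eqb k m then 1 else 0.

(* (H^[lo,hi](theta) - E) is invertible on l^2([lo,hi]) and its Green's function
   R(m,n) satisfies log|R(m,n)| <= -gamma |m-n| for |m-n| >= ell
   (stated as |R(m,n)| <= exp(-gamma|m-n|), with log 0 = -infinity). *)
Definition green_decay (v : R -> R) (alpha eps : R) (lo hi : Z) (theta E gamma ell : R)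
  : Prop :=
  (forall x, supp lo hi x -> (forall n, Hres v alpha eps lo hi theta x n = E * x n) ->
     forall n, x n = 0) /\
  (forall m n, inI lo hi m -> inI lo hi n -> ell <= IZR (Z.abs (m - n)) ->
     forall x, supp lo hi x ->
       (forall k, Hres v alpha eps lo hi theta x k - E * x k = deltaZ n k) ->
       Rabs (x m) <= exp (- gamma * IZR (Z.abs (m - n)))).

From Stdlib Require Import Reals ZArith.
From Coquelicot Require Import Coquelicot.
From Stdlib Require Import Lra Lia Psatz Classical_Prop FunctionalExtensionality.
From mathcomp Require all_boot all_order all_algebra all_classical all_reals all_analysis.
From mathcomp Require Rstruct Rstruct_topology.
Open Scope R_scope.

(* The analytic heart is the spectral
   gap inequality: if mu is a simple eigenvalue of a symmetric A with gap g, then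
   g ||x|| <= ||(A - mu) x|| on the orthogonal complement of its eigenvector (proved by
   minimising ||(A - mu) x|| over the unit sphere, using compactness).  For one Rellich
   pair we then derive the Hellmann-Feynman formula E' = <psi, V' psi>, the formula for
   E'', the bound |E'| <= D0 and, given a gap g, ||psi'|| <= 2 D0 / g.  In the
   perturbation section, comparing the two pairs at theta gives in turn
   |Eh - E| <= 4 delta, |Eh' - E'| <= 6 D0 delta / rho, a bound on (psih - psi)'
   obtained by applying the gap inequality to the differentiated eigenvalue equations,
   and finally the bound on Eh'' - E''. *)

Lemma nsum_ext N f g : (forall k, (k < N)%nat -> f k = g k) -> nsum N f = nsum N g.
Proof.
  induction N as [|N IH]; intros H; simpl; [reflexivity|].
  rewrite IH by (intros; apply H; lia). rewrite H by lia. reflexivity.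
Qed.

Lemma nsum_plus N f g : nsum N (fun k => f k + g k) = nsum N f + nsum N g.
Proof. induction N as [|N IH]; simpl; [lra|]. rewrite IH. lra. Qed.

Lemma nsum_minus N f g : nsum N (fun k => f k - g k) = nsum N f - nsum N g.
Proof. induction N as [|N IH]; simpl; [lra|]. rewrite IH. lra. Qed.

Lemma nsum_scal N c f : nsum N (fun k => c * f k) = c * nsum N f.
Proof. induction N as [|N IH]; simpl; [lra|]. rewrite IH. lra. Qed.

Lemma nsum_zero N : nsum N (fun _ => 0) = 0.
Proof. induction N as [|N IH]; simpl; lra. Qed.

Lemma nsum_le N f g : (forall k, (k < N)%nat -> f k <= g k) -> nsum N f <= nsum N g.
Proof.
  induction N as [|N IH]; intros H; simpl; [lra|].
  pose proof (H N ltac:(lia)). pose proof (IH ltac:(intros; apply H; lia)). lra.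
Qed.

Lemma nsum_split m n f : nsum (m + n) f = nsum m f + nsum n (fun i => f (m + i)%nat).
Proof.
  induction n as [|n IH]; simpl; [rewrite Nat.add_0_r; lra|].
  rewrite Nat.add_succ_r. simpl. rewrite IH. lra.
Qed.

Lemma nsum_single N f k : (k < N)%nat -> (forall i, (i < N)%nat -> i <> k -> f i = 0) ->
  nsum N f = f k.
Proof.
  induction N as [|N IH]; intros Hk H; [lia|]. simpl. destruct (Nat.eq_dec k N) as [->|Hne].
  - rewrite (nsum_ext N f (fun _ => 0)) by (intros; apply H; lia). rewrite nsum_zero. ring.
  - rewrite IH, (H N) by (auto; lia). ring.
Qed.

Lemma nsum_term_le N f k : (k < N)%nat -> (forall i, (i < N)%nat -> 0 <= f i) -> f k <= nsum N f.
Proof.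
  induction N as [|N IH]; intros Hk H; [lia|]. simpl. destruct (Nat.eq_dec k N) as [->|Hne].
  - assert (0 <= nsum N f).
    { rewrite <- (nsum_zero N). apply nsum_le. intros; apply H; lia. }
    lra.
  - pose proof (H N ltac:(lia)). pose proof (IH ltac:(lia) ltac:(intros; apply H; lia)). lra.
Qed.

(* Product rule for real functions, with the derivative in the usual shape. *)
Lemma is_derive_Rmult (f g : R -> R) t df dg : is_derive f t df -> is_derive g t dg ->
  is_derive (fun s => f s * g s) t (df * g t + f t * dg).
Proof. intros Hf Hg. apply (is_derive_mult f g t df dg Hf Hg). intros; apply Rmult_comm. Qed.

Lemma nsum_derive N (f : R -> nat -> R) df t :
  (forall k, is_derive (fun s => f s k) t (df k)) -> is_derive (fun s => nsum N (f s)) t (nsum N df).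
Proof.
  induction N as [|N IH]; intros H; simpl; [apply (is_derive_const 0 t)|].
  apply (is_derive_plus (fun s => nsum N (f s)) (fun s => f s N)); auto.
Qed.

Lemma zsum_ext lo hi f g : (forall n, inI lo hi n -> f n = g n) -> zsum lo hi f = zsum lo hi g.
Proof. intros H. apply nsum_ext. intros k Hk. apply H. unfold inI, card in *. lia. Qed.

Lemma zsum_plus lo hi f g : zsum lo hi (fun n => f n + g n) = zsum lo hi f + zsum lo hi g.
Proof. apply nsum_plus. Qed.

Lemma zsum_minus lo hi f g : zsum lo hi (fun n => f n - g n) = zsum lo hi f - zsum lo hi g.
Proof. apply nsum_minus. Qed.

Lemma zsum_scal lo hi c f : zsum lo hi (fun n => c * f n) = c * zsum lo hi f.
Proof. apply nsum_scal. Qed.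

Lemma zsum_zero lo hi : zsum lo hi (fun _ => 0) = 0.
Proof. apply nsum_zero. Qed.

Lemma zsum_le lo hi f g : (forall n, inI lo hi n -> f n <= g n) -> zsum lo hi f <= zsum lo hi g.
Proof. intros H. apply nsum_le. intros k Hk. apply H. unfold inI, card in *. lia. Qed.

Lemma zsum_nonneg lo hi f : (forall n, inI lo hi n -> 0 <= f n) -> 0 <= zsum lo hi f.
Proof. intros H. rewrite <- (zsum_zero lo hi). apply zsum_le. auto. Qed.

Lemma zsum_split lo m hi f : (lo <= m <= hi + 1)%Z ->
  zsum lo hi f = zsum lo (m - 1) f + zsum m hi f.
Proof.
  intros H. unfold zsum, card.
  replace (Z.to_nat (hi - lo + 1)) with (Z.to_nat (m - 1 - lo + 1) + Z.to_nat (hi - m + 1))%nat by lia.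
  rewrite nsum_split. f_equal. apply nsum_ext. intros k _. f_equal. lia.
Qed.

Lemma zsum_empty lo hi f : (hi < lo)%Z -> zsum lo hi f = 0.
Proof. intros H. unfold zsum, card. replace (Z.to_nat (hi - lo + 1)) with 0%nat by lia. reflexivity. Qed.

Lemma zsum_single n f : zsum n n f = f n.
Proof. unfold zsum, card. replace (Z.to_nat (n - n + 1)) with 1%nat by lia. simpl. rewrite Z.add_0_r. lra. Qed.

Lemma zsum_shift lo hi f : zsum lo hi (fun n => f (n + 1)%Z) = zsum (lo + 1) (hi + 1) f.
Proof.
  unfold zsum, card. replace (hi + 1 - (lo + 1) + 1)%Z with (hi - lo + 1)%Z by lia.
  apply nsum_ext. intros. f_equal. lia.
Qed.

Lemma zsum_sub lo lo' hi' hi f : (lo <= lo')%Z -> (lo' <= hi' + 1)%Z -> (hi' <= hi)%Z ->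
  (forall n, inI lo hi n -> ~ inI lo' hi' n -> f n = 0) -> zsum lo hi f = zsum lo' hi' f.
Proof.
  intros H1 H2 H3 H.
  rewrite (zsum_split lo lo' hi), (zsum_split lo' (hi' + 1) hi) by lia.
  rewrite (zsum_ext lo (lo' - 1) f (fun _ => 0)), (zsum_ext (hi' + 1) hi f (fun _ => 0)), !zsum_zero
    by (intros n Hn; apply H; unfold inI in *; lia).
  replace (hi' + 1 - 1)%Z with hi' by lia. lra.
Qed.

Lemma zsum_derive lo hi (f : R -> Z -> R) df t :
  (forall n, is_derive (fun s => f s n) t (df n)) -> is_derive (fun s => zsum lo hi (f s)) t (zsum lo hi df).
Proof. intros H. apply nsum_derive. intros. apply H. Qed.

(* Euclidean geometry of l^2([lo,hi]): vectors are functions Z -> R, only their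
   values on [lo,hi] matter. *)

Definition sqnorm (lo hi : Z) (x : Z -> R) : R := zsum lo hi (fun n => x n ^ 2).

Lemma sqnorm_nonneg lo hi x : 0 <= sqnorm lo hi x.
Proof. apply zsum_nonneg. intros. nra. Qed.

Lemma sqnorm_ext lo hi x y : (forall n, inI lo hi n -> x n = y n) -> sqnorm lo hi x = sqnorm lo hi y.
Proof. intros H. apply zsum_ext. intros n Hn. rewrite H; auto. Qed.

Lemma inner_self lo hi x : inner lo hi x x = sqnorm lo hi x.
Proof. apply zsum_ext. intros. ring. Qed.

Lemma inner_sym lo hi x y : inner lo hi x y = inner lo hi y x.
Proof. apply zsum_ext. intros. ring. Qed.

Lemma inner_ext_l lo hi x x' y : (forall n, inI lo hi n -> x n = x' n) -> inner lo hi x y = inner lo hi x' y.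
Proof. intros H. apply zsum_ext. intros n Hn. rewrite H; auto. Qed.

Lemma inner_ext_r lo hi x y y' : (forall n, inI lo hi n -> y n = y' n) -> inner lo hi x y = inner lo hi x y'.
Proof. intros H. apply zsum_ext. intros n Hn. rewrite H; auto. Qed.

Lemma inner_add_l lo hi x y z : inner lo hi (fun n => y n + z n) x = inner lo hi y x + inner lo hi z x.
Proof. unfold inner. rewrite <- zsum_plus. apply zsum_ext; intros; ring. Qed.

Lemma inner_sub_l lo hi x y z : inner lo hi (fun n => y n - z n) x = inner lo hi y x - inner lo hi z x.
Proof. unfold inner. rewrite <- zsum_minus. apply zsum_ext; intros; ring. Qed.

Lemma inner_scal_l lo hi x y c : inner lo hi (fun n => c * y n) x = c * inner lo hi y x.
Proof. unfold inner. rewrite <- zsum_scal. apply zsum_ext; intros; ring. Qed.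

Lemma inner_add_r lo hi x y z : inner lo hi x (fun n => y n + z n) = inner lo hi x y + inner lo hi x z.
Proof. rewrite inner_sym, inner_add_l, !(inner_sym lo hi x). reflexivity. Qed.

Lemma inner_sub_r lo hi x y z : inner lo hi x (fun n => y n - z n) = inner lo hi x y - inner lo hi x z.
Proof. rewrite inner_sym, inner_sub_l, !(inner_sym lo hi x). reflexivity. Qed.

Lemma inner_scal_r lo hi x y c : inner lo hi x (fun n => c * y n) = c * inner lo hi x y.
Proof. rewrite inner_sym, inner_scal_l, (inner_sym lo hi x). reflexivity. Qed.

Lemma inner_zero_r lo hi x y : (forall n, inI lo hi n -> y n = 0) -> inner lo hi x y = 0.
Proof. intros H. rewrite (inner_ext_r lo hi x y (fun n => 0 * y n)) by (intros n Hn; rewrite H; auto; ring).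
  rewrite inner_scal_r. ring. Qed.

Lemma sqnorm_expand lo hi x y t :
  sqnorm lo hi (fun n => x n + t * y n) = sqnorm lo hi x + 2 * t * inner lo hi x y + t ^ 2 * sqnorm lo hi y.
Proof. unfold sqnorm, inner. rewrite <- !zsum_scal, <- !zsum_plus. apply zsum_ext. intros. ring. Qed.

Lemma quad_nonneg_discr X P Y :
  0 <= X -> 0 <= Y -> (forall t, 0 <= X + 2 * t * P + t ^ 2 * Y) -> P ^ 2 <= X * Y.
Proof.
  intros HX HY Ht. destruct (Req_dec Y 0) as [HY0|HY0].
  - subst Y. destruct (Req_dec P 0) as [->|HP]; [nra|].
    specialize (Ht (- (X + 1) / (2 * P))).
    replace (X + 2 * (- (X + 1) / (2 * P)) * P + (- (X + 1) / (2 * P)) ^ 2 * 0) with (-1) in Ht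
      by (field; auto). lra.
  - specialize (Ht (- P / Y)).
    replace (X + 2 * (- P / Y) * P + (- P / Y) ^ 2 * Y) with ((X * Y - P ^ 2) / Y) in Ht by (field; auto).
    assert (0 <= (X * Y - P ^ 2) / Y * Y) by (apply Rmult_le_pos; lra).
    replace ((X * Y - P ^ 2) / Y * Y) with (X * Y - P ^ 2) in H by (field; auto). lra.
Qed.

Lemma vnorm_nonneg lo hi x : 0 <= vnorm lo hi x.
Proof. apply sqrt_pos. Qed.

Lemma vnorm_sq lo hi x : vnorm lo hi x * vnorm lo hi x = sqnorm lo hi x.
Proof. apply sqrt_sqrt. apply sqnorm_nonneg. Qed.

Lemma vnorm_unit lo hi x : vnorm lo hi x = 1 <-> sqnorm lo hi x = 1.
Proof.
  split; intros H.
  - rewrite <- vnorm_sq, H. ring.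
  - unfold vnorm. fold (sqnorm lo hi x). rewrite H. apply sqrt_1.
Qed.

Lemma vnorm_ext lo hi x y : (forall n, inI lo hi n -> x n = y n) -> vnorm lo hi x = vnorm lo hi y.
Proof. intros H. unfold vnorm. f_equal. apply (sqnorm_ext lo hi x y H). Qed.

Lemma vnorm_le_of_sq lo hi x M : 0 <= M -> sqnorm lo hi x <= M * M -> vnorm lo hi x <= M.
Proof. intros HM H. unfold vnorm. rewrite <- (sqrt_square M) by auto. apply sqrt_le_1_alt. exact H. Qed.

Lemma cauchy_schwarz lo hi x y : Rabs (inner lo hi x y) <= vnorm lo hi x * vnorm lo hi y.
Proof.
  assert (H0 : 0 <= vnorm lo hi x * vnorm lo hi y) by (apply Rmult_le_pos; apply vnorm_nonneg).
  rewrite <- (Rabs_pos_eq _ H0). apply Rsqr_le_abs_0. unfold Rsqr.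
  replace (vnorm lo hi x * vnorm lo hi y * (vnorm lo hi x * vnorm lo hi y))
    with ((vnorm lo hi x * vnorm lo hi x) * (vnorm lo hi y * vnorm lo hi y)) by ring.
  rewrite !vnorm_sq.
  assert (H : (inner lo hi x y) ^ 2 <= sqnorm lo hi x * sqnorm lo hi y).
  { apply quad_nonneg_discr; try apply sqnorm_nonneg.
    intros t. rewrite <- sqnorm_expand. apply sqnorm_nonneg. }
  simpl in H. lra.
Qed.

Lemma inner_abs_le lo hi x y A B :
  vnorm lo hi x <= A -> vnorm lo hi y <= B -> Rabs (inner lo hi x y) <= A * B.
Proof.
  intros H1 H2. eapply Rle_trans; [apply cauchy_schwarz|].
  apply Rmult_le_compat; auto; apply vnorm_nonneg.
Qed.

Lemma vnorm_add_le lo hi x y : vnorm lo hi (fun n => x n + y n) <= vnorm lo hi x + vnorm lo hi y.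
Proof.
  apply vnorm_le_of_sq; [pose proof (vnorm_nonneg lo hi x); pose proof (vnorm_nonneg lo hi y); lra|].
  rewrite (sqnorm_ext lo hi _ (fun n => x n + 1 * y n)) by (intros; ring).
  rewrite sqnorm_expand, <- (vnorm_sq lo hi x), <- (vnorm_sq lo hi y).
  pose proof (cauchy_schwarz lo hi x y). pose proof (Rle_abs (inner lo hi x y)). nra.
Qed.

Lemma vnorm_scal lo hi c x : vnorm lo hi (fun n => c * x n) = Rabs c * vnorm lo hi x.
Proof.
  unfold vnorm. rewrite <- (sqrt_Rsqr (Rabs c)) by apply Rabs_pos. rewrite <- sqrt_mult_alt by apply Rle_0_sqr.
  f_equal. rewrite <- Rsqr_abs. unfold Rsqr. rewrite <- zsum_scal. apply zsum_ext; intros; ring.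
Qed.

Lemma vnorm_scal_le lo hi c x A B :
  Rabs c <= A -> vnorm lo hi x <= B -> vnorm lo hi (fun n => c * x n) <= A * B.
Proof. intros. rewrite vnorm_scal. apply Rmult_le_compat; auto using Rabs_pos, vnorm_nonneg. Qed.

Lemma vnorm_sub_le lo hi x y : vnorm lo hi (fun n => x n - y n) <= vnorm lo hi x + vnorm lo hi y.
Proof.
  rewrite (vnorm_ext lo hi _ (fun n => x n + (-1) * y n)) by (intros; ring).
  eapply Rle_trans; [apply vnorm_add_le|]. rewrite vnorm_scal.
  replace (Rabs (-1)) with 1 by (rewrite Rabs_left; lra). lra.
Qed.

Lemma vnorm_mult_bound lo hi w x M : 0 <= M -> (forall n, inI lo hi n -> Rabs (w n) <= M) ->
  vnorm lo hi (fun n => w n * x n) <= M * vnorm lo hi x.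
Proof.
  intros HM H. apply vnorm_le_of_sq; [pose proof (vnorm_nonneg lo hi x); nra|].
  replace (M * vnorm lo hi x * (M * vnorm lo hi x)) with (M * M * (vnorm lo hi x * vnorm lo hi x)) by ring.
  rewrite vnorm_sq. unfold sqnorm. rewrite <- zsum_scal. apply zsum_le. intros n Hn.
  specialize (H n Hn). pose proof (Rabs_pos (w n)).
  assert (w n ^ 2 <= M * M) by (rewrite <- pow2_abs; nra).
  replace ((w n * x n) ^ 2) with (w n ^ 2 * x n ^ 2) by ring. pose proof (pow2_ge_0 (x n)). nra.
Qed.

Lemma sqnorm_zero lo hi x : sqnorm lo hi x = 0 -> forall n, inI lo hi n -> x n = 0.
Proof.
  intros H n Hn. unfold sqnorm, zsum in H. unfold inI in Hn.
  assert (Hk : x (lo + Z.of_nat (Z.to_nat (n - lo)))%Z ^ 2 <= 0).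
  { rewrite <- H. apply (nsum_term_le _ (fun k => x (lo + Z.of_nat k)%Z ^ 2)).
    - unfold card. lia.
    - intros. apply pow2_ge_0. }
  replace (lo + Z.of_nat (Z.to_nat (n - lo)))%Z with n in Hk by lia. nra.
Qed.

Lemma sqnorm_pos_nonzero lo hi x : sqnorm lo hi x <> 0 -> exists n, x n <> 0.
Proof.
  intros H. apply NNPP. intros Hn. apply H. unfold sqnorm.
  rewrite (zsum_ext _ _ _ (fun _ => 0)) by (intros n _; destruct (Req_dec (x n) 0) as [->|E];
    [ring | exfalso; apply Hn; eauto]).
  apply zsum_zero.
Qed.

Lemma supp_widen a b c d x : (a <= b)%Z -> (c <= d)%Z -> supp b c x -> supp a d x.
Proof. intros H1 H2 H n Hn. apply H. unfold inI in *. lia. Qed.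

Lemma zsum_widen a b c d f : (a <= b)%Z -> (b <= c)%Z -> (c <= d)%Z ->
  (forall n, ~ inI b c n -> f n = 0) -> zsum a d f = zsum b c f.
Proof. intros. apply zsum_sub; auto; lia. Qed.

Lemma inner_widen a b c d x y : (a <= b)%Z -> (b <= c)%Z -> (c <= d)%Z -> supp b c x ->
  inner a d x y = inner b c x y.
Proof. intros H1 H2 H3 Hx. apply zsum_widen; auto. intros n Hn. rewrite Hx; auto. ring. Qed.

Lemma vnorm_widen a b c d x : (a <= b)%Z -> (b <= c)%Z -> (c <= d)%Z -> supp b c x ->
  vnorm a d x = vnorm b c x.
Proof. intros H1 H2 H3 Hx. unfold vnorm. f_equal. apply zsum_widen; auto. intros n Hn. rewrite Hx; auto. ring. Qed.

Lemma inb_true lo hi n : inI lo hi n -> inb lo hi n = true.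
Proof. unfold inI, inb. intros H. apply andb_true_intro; split; apply Z.leb_le; lia. Qed.

Lemma inb_false lo hi n : ~ inI lo hi n -> inb lo hi n = false.
Proof.
  unfold inI, inb. intros H.
  destruct (Z.leb_spec lo n), (Z.leb_spec n hi); auto. exfalso; lia.
Qed.

Lemma inb_spec lo hi n : {inI lo hi n /\ inb lo hi n = true} + {~ inI lo hi n /\ inb lo hi n = false}.
Proof.
  destruct (Z_le_dec lo n), (Z_le_dec n hi);
    [left; split; [|apply inb_true]| right; split; [|apply inb_false]..]; unfold inI; lia.
Qed.

Lemma restrict_in lo hi x n : inI lo hi n -> restrict lo hi x n = x n.
Proof. intros H. unfold restrict. rewrite inb_true; auto. Qed.

Lemma restrict_out lo hi x n : ~ inI lo hi n -> restrict lo hi x n = 0.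
Proof. intros H. unfold restrict. rewrite inb_false; auto. Qed.

Lemma Hres_in v al ep lo hi t x n : inI lo hi n -> Hres v al ep lo hi t x n =
  ep * (restrict lo hi x (n + 1)%Z + restrict lo hi x (n - 1)%Z) + Vpot v al n t * restrict lo hi x n.
Proof. intros H. unfold Hres. rewrite inb_true; auto. Qed.

Lemma Hres_out v al ep lo hi t x n : ~ inI lo hi n -> Hres v al ep lo hi t x n = 0.
Proof. intros H. unfold Hres. rewrite inb_false; auto. Qed.

Lemma Hres_lin v al ep lo hi t x y c n :
  Hres v al ep lo hi t (fun m => x m + c * y m) n = Hres v al ep lo hi t x n + c * Hres v al ep lo hi t y n.
Proof.
  unfold Hres, restrict. destruct (inb lo hi n); [|ring].
  destruct (inb lo hi (n + 1)), (inb lo hi (n - 1)), (inb lo hi n); ring.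
Qed.

Lemma Hres_sub v al ep lo hi t x y n :
  Hres v al ep lo hi t (fun m => x m - y m) n = Hres v al ep lo hi t x n - Hres v al ep lo hi t y n.
Proof.
  unfold Hres, restrict. destruct (inb lo hi n); [|ring].
  destruct (inb lo hi (n + 1)), (inb lo hi (n - 1)), (inb lo hi n); ring.
Qed.

Lemma Hres_zero v al ep lo hi t x n : (forall m, inI lo hi m -> x m = 0) -> Hres v al ep lo hi t x n = 0.
Proof.
  intros H. unfold Hres, restrict.
  destruct (inb_spec lo hi (n + 1)) as [[? ->]|[? ->]], (inb_spec lo hi (n - 1)) as [[? ->]|[? ->]],
    (inb_spec lo hi n) as [[? ->]|[? ->]]; rewrite ?H; auto; ring.
Qed.

(* Summation by parts for the hopping term: shifting the index of vectors vanishing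
   outside [lo,hi]. *)
Lemma zsum_hop lo hi f g : (lo <= hi)%Z -> (forall n, ~ inI lo hi n -> f n = 0) ->
  (forall n, ~ inI lo hi n -> g n = 0) ->
  zsum lo hi (fun n => f n * g (n + 1)%Z) = zsum lo hi (fun n => f (n - 1)%Z * g n).
Proof.
  intros Hle Hf Hg.
  rewrite (zsum_split lo hi hi), zsum_single by lia.
  rewrite (zsum_split lo (lo + 1) hi (fun n => f (n - 1)%Z * g n)) by lia.
  replace (lo + 1 - 1)%Z with lo by lia. rewrite zsum_single.
  rewrite (Hg (hi + 1)%Z), (Hf (lo - 1)%Z) by (unfold inI; lia).
  pose proof (zsum_shift lo (hi - 1) (fun n => f (n - 1)%Z * g n)) as E.
  replace (hi - 1 + 1)%Z with hi in E by lia. rewrite <- E.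
  rewrite (zsum_ext lo (hi - 1) (fun n => f (n + 1 - 1)%Z * g (n + 1)%Z) (fun n => f n * g (n + 1)%Z))
    by (intros n _; replace (n + 1 - 1)%Z with n by lia; reflexivity).
  lra.
Qed.

Lemma Hres_sym v al ep lo hi t x y :
  inner lo hi x (Hres v al ep lo hi t y) = inner lo hi (Hres v al ep lo hi t x) y.
Proof.
  destruct (Z_lt_le_dec hi lo) as [Hlt|Hle]; [unfold inner; rewrite !zsum_empty; auto|].
  unfold inner. set (rx := restrict lo hi x). set (ry := restrict lo hi y).
  assert (Hx : forall n, ~ inI lo hi n -> rx n = 0) by (intros; apply restrict_out; auto).
  assert (Hy : forall n, ~ inI lo hi n -> ry n = 0) by (intros; apply restrict_out; auto).
  rewrite (zsum_ext lo hi _ (fun n => ep * (rx n * ry (n + 1)%Z) + ep * (ry (n - 1)%Z * rx n)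
                                     + Vpot v al n t * rx n * ry n)).
  2:{ intros n Hn. rewrite Hres_in by auto. unfold rx, ry. rewrite (restrict_in lo hi x n Hn). ring. }
  rewrite (zsum_ext lo hi (fun n => Hres v al ep lo hi t x n * y n)
     (fun n => ep * (rx (n - 1)%Z * ry n) + ep * (ry n * rx (n + 1)%Z) + Vpot v al n t * rx n * ry n)).
  2:{ intros n Hn. rewrite Hres_in by auto. unfold rx, ry. rewrite (restrict_in lo hi y n Hn). ring. }
  rewrite !zsum_plus, !zsum_scal, (zsum_hop lo hi rx ry), (zsum_hop lo hi ry rx) by auto. ring.
Qed.

Lemma HP_core v al ep a b c d t x n : (a < b)%Z -> (b <= c)%Z -> (c < d)%Z -> supp b c x ->
  HP v al ep a b c d t x n = Hres v al ep b c t x n.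
Proof.
  intros H1 H2 H3 Hx. unfold HP.
  rewrite (Hres_zero v al ep a (b - 1)), (Hres_zero v al ep (c + 1) d); [ring| |];
    intros m Hm; apply Hx; unfold inI in *; lia.
Qed.

Lemma Hres_core_split v al ep a b c d t x n : (a < b)%Z -> (b <= c)%Z -> (c < d)%Z -> supp b c x ->
  Hres v al ep a d t x n = Hres v al ep b c t x n + GammaP v al ep a b c d t x n.
Proof. intros. unfold GammaP. rewrite HP_core by auto. ring. Qed.

Definition mulop (lo hi : Z) (w x : Z -> R) : Z -> R :=
  fun n => if inb lo hi n then w n * x n else 0.

Definition shifted (f : R -> R) (al t : R) : Z -> R := fun n => f (t + IZR n * al).

Lemma mulop_in lo hi w x n : inI lo hi n -> mulop lo hi w x n = w n * x n.
Proof. intros H. unfold mulop. rewrite inb_true; auto. Qed.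

Lemma mulop_widen a b c d w x n : (a <= b)%Z -> (c <= d)%Z -> supp b c x ->
  mulop b c w x n = mulop a d w x n.
Proof.
  intros H1 H2 Hx. unfold mulop.
  destruct (inb_spec b c n) as [[Hn ->]|[Hn ->]].
  - rewrite inb_true; auto. unfold inI in *; lia.
  - rewrite Hx by auto. destruct (inb a d n); ring.
Qed.

Lemma shifted_derive f al t n : ex_derive f (t + IZR n * al) ->
  is_derive (fun s => shifted f al s n) t (shifted (Derive f) al t n).
Proof.
  intros H. apply Derive_correct in H.
  assert (Hl : is_derive (fun s => s + IZR n * al) t 1).
  { replace 1 with (1 + 0) by ring.
    apply (is_derive_plus (fun s => s) (fun _ => IZR n * al)).
    - apply (is_derive_id t).
    - apply (is_derive_const (IZR n * al) t). }
  pose proof (is_derive_comp f (fun s => s + IZR n * al) t _ _ H Hl) as K.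
  unfold shifted. rewrite <- (scal_one (Derive f (t + IZR n * al))). exact K.
Qed.

Lemma Hres_derive v al ep lo hi (x : R -> Z -> R) dx t n : (forall y, ex_derive v y) ->
  (forall k, is_derive (fun s => x s k) t (dx k)) ->
  is_derive (fun s => Hres v al ep lo hi s (x s) n) t
    (Hres v al ep lo hi t dx n + mulop lo hi (shifted (Derive v) al t) (x t) n).
Proof.
  intros Hv H. unfold Hres, mulop.
  destruct (inb_spec lo hi n) as [[Hn ->]|[Hn ->]].
  2:{ replace (0 + 0) with 0 by ring. apply (is_derive_const 0 t). }
  assert (Hr : forall m, is_derive (fun s => restrict lo hi (x s) m) t (restrict lo hi dx m)).
  { intros m. unfold restrict. destruct (inb lo hi m); [apply H| apply (is_derive_const 0 t)]. }
  replace (ep * (restrict lo hi dx (n + 1)%Z + restrict lo hi dx (n - 1)%Z) + Vpot v al n t * restrict lo hi dx n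
           + shifted (Derive v) al t n * x t n)
    with (ep * (restrict lo hi dx (n + 1)%Z + restrict lo hi dx (n - 1)%Z)
          + (shifted (Derive v) al t n * restrict lo hi (x t) n + shifted v al t n * restrict lo hi dx n))
    by (rewrite (restrict_in lo hi (x t) n Hn); unfold shifted, Vpot; ring).
  apply (is_derive_plus (fun s => ep * (restrict lo hi (x s) (n + 1)%Z + restrict lo hi (x s) (n - 1)%Z))
                        (fun s => Vpot v al n s * restrict lo hi (x s) n)).
  - apply is_derive_scal. apply (is_derive_plus (fun s => restrict lo hi (x s) (n + 1)%Z)
                                                (fun s => restrict lo hi (x s) (n - 1)%Z)); apply Hr.
  - apply (is_derive_Rmult (fun s => shifted v al s n) (fun s => restrict lo hi (x s) n)).
    + apply shifted_derive, Hv.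
    + apply Hr.
Qed.

(* Coordinates: a constrained least-squares problem in R^N has a minimiser.  This
   is the only use of compactness (of the unit sphere of R^N), taken from
   MathComp-Analysis. *)

Definition dot (N : nat) (x y : nat -> R) : R := nsum N (fun i => x i * y i).

Definition lsq (N K : nat) (L : nat -> nat -> R) (x : nat -> R) : R :=
  nsum K (fun k => dot N (L k) x * dot N (L k) x).

Module Compactness.
Import all_boot all_order all_algebra all_classical all_reals all_analysis Rstruct Rstruct_topology.
Import Order.TTheory GRing.Theory Num.Theory.
Local Open Scope ring_scope.
Local Open Scope classical_set_scope.

Section Minimiser.
Variables (N K : nat) (L : nat -> nat -> R) (c : nat -> R).

Let xr (r : 'rV[R]_N) (i : nat) : R :=
  if @insub _ (fun k => k < N)%N _ i is Some j then r ord0 j else 0.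

Let xrE r (j : 'I_N) : xr r j = r ord0 j.
Proof. by rewrite /xr valK. Qed.

Let xr_row (x : nat -> R) i : (i < N)%N -> xr (\row_(j < N) x j) i = x i.
Proof. by move=> Hi; rewrite /xr insubT mxE. Qed.

Let nsum_big (M : nat) (f : nat -> R) : nsum M f = \sum_(i < M) f i.
Proof. by elim: M => [|M IH] /=; [rewrite big_ord0 | rewrite big_ord_recr /= IH]. Qed.

Let cont_nsum (M : nat) (f : nat -> 'rV[R]_N -> R) :
  (forall i, continuous (f i)) -> continuous (fun r => nsum M (fun i => f i r)).
Proof.
elim: M => [|M IH] Hf /=; first exact: cst_continuous.
by move=> r; apply: (@continuousD R R^o); [exact: IH | exact: Hf].
Qed.

Let cont_mul (f g : 'rV[R]_N -> R) : continuous f -> continuous g -> continuous (fun r => f r * g r).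
Proof. by move=> Hf Hg r; apply: continuousM; [exact: Hf | exact: Hg]. Qed.

Let cont_xr i : continuous (fun r => xr r i).
Proof. rewrite /xr; case: insub => [j|]; [exact: coord_continuous | exact: cst_continuous]. Qed.

Let cont_dot (y : nat -> R) : continuous (fun r => dot N y (xr r)).
Proof. by apply: cont_nsum => i; apply: cont_mul; [exact: cst_continuous | exact: cont_xr]. Qed.

Let row_eq (f : nat -> R) (x : nat -> R) :
  nsum N (fun i => f i * x i) = nsum N (fun i => f i * xr (\row_(j < N) x j) i).
Proof. apply: nsum_ext => i /ssrnat.ltP Hi; by rewrite xr_row. Qed.

Lemma lsq_attains_min :
  (exists x : nat -> R, dot N x x = R1 /\ dot N c x = R0) ->
  exists x0 : nat -> R, dot N x0 x0 = R1 /\ dot N c x0 = R0 /\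
    forall x, dot N x x = R1 -> dot N c x = R0 -> Rle (lsq N K L x0) (lsq N K L x).
Proof.
move=> [x [x1 xc]].
pose A := [set r : 'rV[R]_N | dot N (xr r) (xr r) = 1 /\ dot N c (xr r) = 0].
have rowA y : dot N y y = R1 -> dot N c y = R0 -> A (\row_(j < N) y j).
  move=> y1 yc; split; [apply: etrans y1 | apply: etrans yc];
  by apply: nsum_ext => i /ssrnat.ltP Hi; rewrite xr_row.
have clA : closed A.
  have -> : A = (fun r => dot N (xr r) (xr r)) @^-1` [set 1] `&` (fun r => dot N c (xr r)) @^-1` [set 0].
    by apply/seteqP; split => r.
  apply: closedI; apply: preimage_closed; try exact: closed_eq.
    by move=> r _; apply: cont_nsum => i; apply: cont_mul; exact: cont_xr.
  by move=> r _; exact: cont_dot.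
pose box := [set r : 'rV[R]_N | forall i : 'I_N, (fun=> `[(-1 : R), 1]%classic) i (r ord0 i)].
have AB : A `<=` box.
  move=> r [r1 _] i /=; rewrite -xrE.
  have /RleP Hi : xr r i * xr r i <= 1.
    rewrite -r1 /dot nsum_big (bigD1 i) //= lerDl.
    by apply: sumr_ge0 => j _; apply/RleP; apply: Rle_0_sqr.
  have Hi' : Rle (Rmult (xr r i) (xr r i)) R1 := Hi.
  have [H1 H2] : Rle (Ropp R1) (xr r i) /\ Rle (xr r i) R1 by split; Psatz.nra.
  by rewrite in_itv /=; apply/andP; split; apply/RleP.
have cA : compact A.
  apply: (subclosed_compact clA _ AB).
  by apply: rV_compact => _; exact: segment_compact.
have cQ : continuous (fun r => lsq N K L (xr r)).
  by apply: cont_nsum => k; apply: cont_mul; exact: cont_dot.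
have [r0 r0A r0min] := compact_EVT_min (ex_intro _ _ (rowA x x1 xc)) cA (continuous_subspaceT cQ).
move: r0A; rewrite inE => -[r01 r0c].
exists (xr r0); split; [exact: r01|split; [exact: r0c|]] => y y1 yc.
have -> : lsq N K L y = lsq N K L (xr (\row_(j < N) y j)).
  by apply: nsum_ext => k _; rewrite /dot (row_eq (L k) y).
by apply/RleP; apply: r0min; rewrite inE; exact: rowA.
Qed.
End Minimiser.
End Compactness.

(* Proof: minimise
   ||(A - mu) x||^2 = m over unit vectors x orthogonal to phi; a minimiser z satisfies
   (A - mu)^2 z = m z, so (A - mu) z + sqrt m z (or z itself) is an eigenvector of A
   for mu + sqrt m (or mu - sqrt m), whence g <= sqrt m. *)

Definition spectral_gap (A : (Z -> R) -> Z -> R) (lo hi : Z) (mu : R) (phi : Z -> R) (g : R) : Prop :=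
  forall lam y, supp lo hi y -> (exists n, y n <> 0) -> inner lo hi y phi = 0 ->
    (forall n, A y n = lam * y n) -> g <= Rabs (lam - mu).

Lemma quad_linear_zero a K : 0 <= a -> (forall t, 0 <= 2 * t * a + t ^ 2 * K) -> a = 0.
Proof.
  intros Ha H. destruct (Req_dec a 0) as [|Hne]; auto. exfalso.
  assert (HK : 0 < Rabs K + 1) by (pose proof (Rabs_pos K); lra).
  specialize (H (- a / (Rabs K + 1))). set (t := - a / (Rabs K + 1)) in H.
  assert (Ht : t * (Rabs K + 1) = - a) by (unfold t; field; lra).
  assert (t < 0) by (unfold t; apply Rdiv_neg_pos; lra).
  pose proof (Rle_abs K).
  assert (t ^ 2 * K <= t ^ 2 * Rabs K) by (apply Rmult_le_compat_l; nra).
  nra.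
Qed.

Section SpectralGap.
Variables (lo hi : Z) (A : (Z -> R) -> Z -> R) (mu g : R) (phi : Z -> R).
Hypothesis A_lin : forall x y c n, A (fun m => x m + c * y m) n = A x n + c * A y n.
Hypothesis A_out : forall x n, ~ inI lo hi n -> A x n = 0.
Hypothesis A_sym : forall x y, inner lo hi x (A y) = inner lo hi (A x) y.
Hypothesis phi_supp : supp lo hi phi.
Hypothesis phi_unit : sqnorm lo hi phi = 1.
Hypothesis phi_eig : forall n, A phi n = mu * phi n.
Hypothesis g_nonneg : 0 <= g.
Hypothesis gap : spectral_gap A lo hi mu phi g.

Let T (x : Z -> R) : Z -> R := fun n => A x n - mu * x n.

Let T_lin x y c n : T (fun m => x m + c * y m) n = T x n + c * T y n.
Proof. unfold T. rewrite A_lin. ring. Qed.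

Let T_zero n : T (fun _ => 0) n = 0.
Proof.
  pose proof (T_lin (fun _ => 0) (fun _ => 0) 1 n) as H. cbv beta in H.
  replace (fun _ : Z => 0 + 1 * 0) with (fun _ : Z => 0) in H
    by (apply functional_extensionality; intros; ring).
  lra.
Qed.

Let T_scal c x n : T (fun m => c * x m) n = c * T x n.
Proof.
  pose proof (T_lin (fun _ => 0) x c n) as H. cbv beta in H. rewrite T_zero in H.
  replace (fun m : Z => 0 + c * x m) with (fun m => c * x m) in H
    by (apply functional_extensionality; intros; ring).
  lra.
Qed.

Let T_supp x : supp lo hi x -> supp lo hi (T x).
Proof. intros H n Hn. unfold T. rewrite A_out, H; auto; ring. Qed.

Let T_sym x y : inner lo hi x (T y) = inner lo hi (T x) y.
Proof.
  unfold T. rewrite inner_sub_r, inner_sub_l, inner_scal_r, inner_scal_l, A_sym, (inner_sym lo hi x y). ring.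
Qed.

Let T_phi_orth x : inner lo hi (T x) phi = 0.
Proof. rewrite <- T_sym. apply inner_zero_r. intros n _. unfold T. rewrite phi_eig. ring. Qed.

Let N := card lo hi.
Let crd (x : Z -> R) (i : nat) : R := x (lo + Z.of_nat i)%Z.
Let basis (i : nat) : Z -> R := deltaZ (lo + Z.of_nat i)%Z.
Let L (k i : nat) : R := T (basis i) (lo + Z.of_nat k)%Z.

Let coord_expand x : supp lo hi x -> forall n, x n = nsum N (fun i => crd x i * basis i n).
Proof.
  intros Hx n. destruct (inb_spec lo hi n) as [[Hn _]|[Hn _]].
  - unfold inI in Hn. rewrite (nsum_single N _ (Z.to_nat (n - lo))).
    + unfold crd, basis, deltaZ. replace (lo + Z.of_nat (Z.to_nat (n - lo)))%Z with n by lia.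
      rewrite Z.eqb_refl. ring.
    + unfold N, card. lia.
    + intros i Hi Hne. unfold basis, deltaZ. destruct (Z.eqb_spec n (lo + Z.of_nat i)); [lia|ring].
  - rewrite Hx by auto. rewrite (nsum_ext N _ (fun _ => 0)), nsum_zero; auto.
    intros i Hi. unfold basis, deltaZ. destruct (Z.eqb_spec n (lo + Z.of_nat i)); [|ring].
    exfalso. apply Hn. unfold inI, N, card in *. lia.
Qed.

Let T_expand x : supp lo hi x -> forall m, T x m = nsum N (fun i => crd x i * T (basis i) m).
Proof.
  intros Hx m.
  transitivity (T (fun n => nsum N (fun i => crd x i * basis i n)) m).
  { f_equal. apply functional_extensionality. apply coord_expand, Hx. }
  generalize N as K. induction K as [|K IH]; simpl; [apply T_zero|].
  rewrite <- IH. apply T_lin.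
Qed.

Let sqnorm_coord x : sqnorm lo hi x = dot N (crd x) (crd x).
Proof. unfold sqnorm, zsum, dot. apply nsum_ext. intros. unfold crd. ring. Qed.

Let inner_coord x : inner lo hi x phi = dot N (crd phi) (crd x).
Proof. unfold inner, zsum, dot. apply nsum_ext. intros. unfold crd. ring. Qed.

Let sqnorm_T_coord x : supp lo hi x -> sqnorm lo hi (T x) = lsq N N L (crd x).
Proof.
  intros Hx. unfold sqnorm, zsum, lsq, dot. fold N. apply nsum_ext. intros k Hk.
  rewrite T_expand by auto. unfold L.
  rewrite (nsum_ext N (fun i => crd x i * T (basis i) (lo + Z.of_nat k)%Z)
                      (fun i => T (basis i) (lo + Z.of_nat k)%Z * crd x i)) by (intros; ring).
  ring.
Qed.

Let normalise x : 0 < sqnorm lo hi x ->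
  exists c, c * c * sqnorm lo hi x = 1 /\ sqnorm lo hi (fun n => c * x n) = 1.
Proof.
  intros Hx. exists (/ sqrt (sqnorm lo hi x)).
  assert (Hc : / sqrt (sqnorm lo hi x) * / sqrt (sqnorm lo hi x) * sqnorm lo hi x = 1).
  { rewrite <- Rinv_mult, sqrt_sqrt by lra. field. lra. }
  split; auto. rewrite <- Hc. unfold sqnorm. rewrite <- zsum_scal. apply zsum_ext. intros. ring.
Qed.

Let minimiser (x : Z -> R) : supp lo hi x -> inner lo hi x phi = 0 -> 0 < sqnorm lo hi x ->
  exists z, supp lo hi z /\ sqnorm lo hi z = 1 /\ inner lo hi z phi = 0 /\
    forall y, supp lo hi y -> inner lo hi y phi = 0 ->
      sqnorm lo hi (T z) * sqnorm lo hi y <= sqnorm lo hi (T y).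
Proof.
  intros Hx Hxp HxP. destruct (normalise x HxP) as [cx [_ Hcx]].
  destruct (Compactness.lsq_attains_min N N L (crd phi)) as [c0 [Hc1 [Hc2 Hmin]]].
  { exists (crd (fun n => cx * x n)). split.
    - rewrite <- sqnorm_coord. exact Hcx.
    - rewrite <- inner_coord, inner_scal_l, Hxp. simpl. ring. }
  set (z := fun n => if inb lo hi n then c0 (Z.to_nat (n - lo)) else 0).
  assert (Hzs : supp lo hi z) by (intros n Hn; unfold z; rewrite inb_false; auto).
  assert (Hcz : forall i, (i < N)%nat -> crd z i = c0 i).
  { intros i Hi. unfold crd, z. rewrite inb_true by (unfold inI, N, card in *; lia). f_equal. lia. }
  assert (Edot : forall f, dot N f (crd z) = dot N f c0)
    by (intros; apply nsum_ext; intros; rewrite Hcz; auto).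
  exists z. split; [|split; [|split]]; auto.
  - rewrite sqnorm_coord. unfold dot. rewrite (nsum_ext N _ (fun i => c0 i * c0 i)); [exact Hc1|].
    intros. rewrite Hcz; auto.
  - rewrite inner_coord, Edot. exact Hc2.
  - intros y Hy Hyp. destruct (Req_dec (sqnorm lo hi y) 0) as [Hy0|Hy0].
    { rewrite Hy0, Rmult_0_r. apply sqnorm_nonneg. }
    assert (HyP : 0 < sqnorm lo hi y) by (pose proof (sqnorm_nonneg lo hi y); lra).
    destruct (normalise y HyP) as [cy [Hcy Hcy1]].
    assert (Hmin' := Hmin (crd (fun n => cy * y n))).
    rewrite <- sqnorm_coord, <- inner_coord, inner_scal_l, Hyp, Rmult_0_r in Hmin'.
    specialize (Hmin' Hcy1 eq_refl).
    rewrite <- sqnorm_T_coord in Hmin' by (intros n Hn; rewrite Hy; auto; ring).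
    assert (EL : lsq N N L c0 = sqnorm lo hi (T z)).
    { rewrite sqnorm_T_coord by auto. apply nsum_ext. intros k _. rewrite Edot. reflexivity. }
    rewrite EL in Hmin'.
    assert (E2 : sqnorm lo hi (T (fun n => cy * y n)) = cy * cy * sqnorm lo hi (T y)).
    { unfold sqnorm. rewrite <- zsum_scal. apply zsum_ext. intros n _. rewrite T_scal. ring. }
    rewrite E2 in Hmin'. pose proof (sqnorm_nonneg lo hi (T y)). nra.
Qed.

(* First variation: a minimiser z is an eigenvector of T^2 with eigenvalue m = ||T z||^2. *)
Let minimiser_eigen z : supp lo hi z -> sqnorm lo hi z = 1 -> inner lo hi z phi = 0 ->
  (forall y, supp lo hi y -> inner lo hi y phi = 0 ->
     sqnorm lo hi (T z) * sqnorm lo hi y <= sqnorm lo hi (T y)) ->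
  forall n, T (T z) n = sqnorm lo hi (T z) * z n.
Proof.
  intros Hzs Hz1 Hzp HM. set (m := sqnorm lo hi (T z)).
  set (w := fun n => T (T z) n - m * z n).
  assert (Hws : supp lo hi w) by (intros n Hn; unfold w; rewrite (T_supp _ (T_supp _ Hzs)), Hzs; auto; ring).
  assert (Hwp : inner lo hi w phi = 0) by (unfold w; rewrite inner_sub_l, inner_scal_l, T_phi_orth, Hzp; ring).
  assert (Hw0 : sqnorm lo hi w = 0).
  { apply (quad_linear_zero (sqnorm lo hi w) (sqnorm lo hi (T w) - m * sqnorm lo hi w)); [apply sqnorm_nonneg|].
    intros t. set (yt := fun n => z n + t * w n).
    assert (Hyt : m * sqnorm lo hi yt <= sqnorm lo hi (T yt)).
    { apply HM; unfold yt.
      - intros n Hn. rewrite Hzs, Hws; auto. ring.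
      - rewrite inner_add_l, inner_scal_l, Hzp, Hwp. ring. }
    rewrite (sqnorm_ext lo hi (T yt) (fun n => T z n + t * T w n)) in Hyt by (intros; apply T_lin).
    unfold yt in Hyt. rewrite !sqnorm_expand, Hz1, (T_sym (T z) w) in Hyt.
    assert (E : inner lo hi (T (T z)) w = sqnorm lo hi w + m * inner lo hi z w).
    { rewrite (inner_ext_l lo hi _ (fun n => w n + m * z n)) by (intros; unfold w; ring).
      rewrite inner_add_l, inner_scal_l, inner_self. ring. }
    rewrite E in Hyt. fold m in Hyt. nra. }
  intros n. destruct (inb_spec lo hi n) as [[Hn _]|[Hn _]].
  - pose proof (sqnorm_zero lo hi w Hw0 n Hn) as H. unfold w in H. fold m. lra.
  - rewrite (T_supp _ (T_supp _ Hzs)), Hzs; auto. ring.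
Qed.

(* The minimum m is at least g^2: sqrt m is the distance from mu of an eigenvalue
   whose eigenvector is orthogonal to phi. *)
Let minimum_ge_gap z : supp lo hi z -> sqnorm lo hi z = 1 -> inner lo hi z phi = 0 ->
  (forall n, T (T z) n = sqnorm lo hi (T z) * z n) -> g * g <= sqnorm lo hi (T z).
Proof.
  intros Hzs Hz1 Hzp HTT. set (m := sqnorm lo hi (T z)) in *.
  assert (Hs2 : sqrt m * sqrt m = m) by (apply sqrt_sqrt, sqnorm_nonneg).
  assert (Hs0 : 0 <= sqrt m) by apply sqrt_pos.
  set (s := sqrt m) in *.
  set (y := fun n => T z n + s * z n).
  assert (Hgs : g <= s).
  { destruct (classic (exists n, y n <> 0)) as [Hy|Hy].
    - replace s with (Rabs (mu + s - mu)) by (rewrite Rabs_pos_eq; lra).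
      apply (gap (mu + s) y); auto.
      + intros n Hn. unfold y. rewrite (T_supp _ Hzs), Hzs; auto. ring.
      + unfold y. rewrite inner_add_l, inner_scal_l, T_phi_orth, Hzp. ring.
      + intros n. pose proof (T_lin (T z) z s n) as E. rewrite HTT, <- Hs2 in E.
        assert (E' : A y n = mu * y n + (s * s * z n + s * T z n))
          by (unfold y; unfold T at 1 in E; lra).
        rewrite E'. unfold y. ring.
    - replace s with (Rabs (mu - s - mu)) by (rewrite Rabs_left1; lra).
      apply (gap (mu - s) z); auto.
      + apply (sqnorm_pos_nonzero lo hi). lra.
      + intros n. assert (H : y n = 0) by (apply NNPP; intros H; apply Hy; eauto).
        unfold y, T in H. lra. }
  nra.
Qed.

Lemma gap_inequality x : supp lo hi x -> inner lo hi x phi = 0 ->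
  g * vnorm lo hi x <= vnorm lo hi (fun n => A x n - mu * x n).
Proof.
  intros Hx Hxp. fold (T x).
  destruct (Req_dec (sqnorm lo hi x) 0) as [Hx0|Hx0].
  { unfold vnorm. fold (sqnorm lo hi x). rewrite Hx0, sqrt_0, Rmult_0_r. apply sqrt_pos. }
  assert (HxP : 0 < sqnorm lo hi x) by (pose proof (sqnorm_nonneg lo hi x); lra).
  destruct (minimiser x Hx Hxp HxP) as [z [Hzs [Hz1 [Hzp HM]]]].
  pose proof (minimum_ge_gap z Hzs Hz1 Hzp (minimiser_eigen z Hzs Hz1 Hzp HM)).
  pose proof (HM x Hx Hxp).
  apply Rsqr_incr_0_var; [|apply vnorm_nonneg]. unfold Rsqr.
  replace (g * vnorm lo hi x * (g * vnorm lo hi x)) with (g * g * (vnorm lo hi x * vnorm lo hi x)) by ring.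
  rewrite !vnorm_sq. pose proof (sqnorm_nonneg lo hi x). nra.
Qed.
End SpectralGap.

Definition qform (lo hi : Z) (w x : Z -> R) : R := inner lo hi x (fun n => w n * x n).

(* q_w(x) - q_w(y) = <x - y, w (x + y)>, hence a Lipschitz bound in x. *)
Lemma qform_diff_bound lo hi w x y M : 0 <= M -> (forall n, inI lo hi n -> Rabs (w n) <= M) ->
  Rabs (qform lo hi w x - qform lo hi w y)
    <= vnorm lo hi (fun n => x n - y n) * (M * (vnorm lo hi x + vnorm lo hi y)).
Proof.
  intros HM Hw.
  replace (qform lo hi w x - qform lo hi w y)
    with (inner lo hi (fun n => x n - y n) (fun n => w n * (x n + y n)))
    by (unfold qform, inner; rewrite <- zsum_minus; apply zsum_ext; intros; ring).
  apply inner_abs_le; [lra|].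
  eapply Rle_trans; [apply vnorm_mult_bound; eauto|].
  apply Rmult_le_compat_l; [lra|apply vnorm_add_le].
Qed.

Lemma qform_derive lo hi (w x : R -> Z -> R) dw dx t :
  (forall n, is_derive (fun s => w s n) t (dw n)) -> (forall n, is_derive (fun s => x s n) t (dx n)) ->
  is_derive (fun s => qform lo hi (w s) (x s)) t
    (2 * inner lo hi dx (fun n => w t n * x t n) + qform lo hi dw (x t)).
Proof.
  intros Hw Hx. unfold qform, inner.
  replace (2 * zsum lo hi (fun n => dx n * (w t n * x t n)) + zsum lo hi (fun n => x t n * (dw n * x t n)))
    with (zsum lo hi (fun n => dx n * (w t n * x t n) + x t n * (dw n * x t n + w t n * dx n)))
    by (rewrite <- zsum_scal, <- zsum_plus; apply zsum_ext; intros; ring).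
  apply zsum_derive. intros n.
  apply (is_derive_Rmult (fun s => x s n) (fun s => w s n * x s n)); [apply Hx|].
  apply (is_derive_Rmult (fun s => w s n) (fun s => x s n)); [apply Hw|apply Hx].
Qed.

Definition vderiv (x : R -> Z -> R) (t : R) : Z -> R := fun n => Derive (fun s => x s n) t.

Section RellichCalculus.
Variables (v : R -> R) (al ep : R) (lo hi : Z) (P : R -> Prop) (E : R -> R) (psi : R -> Z -> R).
Hypothesis v_deriv : forall y, ex_derive v y.
Hypothesis P_open : forall t, P t -> locally t P.
Hypothesis rellich : RellichPair (Hres v al ep lo hi) lo hi P E psi.

Let H := Hres v al ep lo hi.

Lemma eigval_derive t : P t -> is_derive E t (Derive E t).
Proof. intros Pt. apply Derive_correct. apply (proj1 rellich t Pt). Qed.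

Lemma eigvec_derive t n : P t -> is_derive (fun s => psi s n) t (vderiv psi t n).
Proof. intros Pt. apply Derive_correct. apply (proj1 (proj2 rellich) n t Pt). Qed.

Lemma eigvec_supp t : P t -> supp lo hi (psi t).
Proof. intros Pt. apply (proj2 (proj2 rellich) t Pt). Qed.

Lemma eigvec_unit t : P t -> vnorm lo hi (psi t) = 1.
Proof. intros Pt. apply (proj2 (proj2 rellich) t Pt). Qed.

Lemma eigvec_eq t n : P t -> H t (psi t) n = E t * psi t n.
Proof. intros Pt. apply (proj2 (proj2 rellich) t Pt). Qed.

Lemma eigvec_simple t x : P t -> supp lo hi x -> (forall n, H t x n = E t * x n) ->
  exists c, forall n, x n = c * psi t n.
Proof. intros Pt. apply (proj2 (proj2 rellich) t Pt). Qed.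

Lemma vderiv_supp t : P t -> supp lo hi (vderiv psi t).
Proof.
  intros Pt n Hn. unfold vderiv. rewrite (Derive_ext_loc _ (fun _ => 0)); [apply Derive_const|].
  apply (filter_imp P); [|apply P_open; auto]. intros s Ps. apply eigvec_supp; auto.
Qed.

(* Differentiating ||psi||^2 = 1: psi' is orthogonal to psi. *)
Lemma vderiv_orth t : P t -> inner lo hi (psi t) (vderiv psi t) = 0.
Proof.
  intros Pt.
  assert (H1 : is_derive (fun s => sqnorm lo hi (psi s)) t (2 * inner lo hi (psi t) (vderiv psi t))).
  { unfold sqnorm, inner. rewrite <- zsum_scal. apply zsum_derive. intros n.
    apply (is_derive_ext (fun s => psi s n * psi s n)); [intros; simpl; ring|].
    replace (2 * (psi t n * vderiv psi t n)) with (vderiv psi t n * psi t n + psi t n * vderiv psi t n) by ring.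
    apply is_derive_Rmult; apply eigvec_derive; auto. }
  assert (H2 : is_derive (fun s => sqnorm lo hi (psi s)) t 0).
  { apply (is_derive_ext_loc (fun _ => 1)); [|apply (is_derive_const 1 t)].
    apply (filter_imp P); [|apply P_open; auto]. intros s Ps. symmetry. apply vnorm_unit, eigvec_unit; auto. }
  pose proof (is_derive_unique _ _ _ H1). pose proof (is_derive_unique _ _ _ H2). lra.
Qed.

Lemma eigen_eq_derive t n : P t ->
  H t (vderiv psi t) n + mulop lo hi (shifted (Derive v) al t) (psi t) n
    = Derive E t * psi t n + E t * vderiv psi t n.
Proof.
  intros Pt.
  assert (H1 := Hres_derive v al ep lo hi psi (vderiv psi t) t n v_deriv (fun k => eigvec_derive t k Pt)).
  assert (H2 : is_derive (fun s => E s * psi s n) t (Derive E t * psi t n + E t * vderiv psi t n)).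
  { apply (is_derive_Rmult E (fun s => psi s n)); [apply eigval_derive| apply eigvec_derive]; auto. }
  apply (is_derive_ext_loc _ (fun s => E s * psi s n)) in H1.
  - pose proof (is_derive_unique _ _ _ H1). pose proof (is_derive_unique _ _ _ H2). unfold H. congruence.
  - apply (filter_imp P); [|apply P_open; auto]. intros s Ps. apply eigvec_eq; auto.
Qed.

Lemma hellmann_feynman t : P t -> Derive E t = qform lo hi (shifted (Derive v) al t) (psi t).
Proof.
  intros Pt.
  assert (Heq : inner lo hi (psi t) (fun n => H t (vderiv psi t) n + mulop lo hi (shifted (Derive v) al t) (psi t) n)
              = inner lo hi (psi t) (fun n => Derive E t * psi t n + E t * vderiv psi t n)).
  { apply inner_ext_r. intros. apply eigen_eq_derive; auto. }
  rewrite !inner_add_r, !inner_scal_r, inner_self, (proj1 (vnorm_unit _ _ _) (eigvec_unit t Pt)) in Heq.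
  unfold H in Heq. rewrite Hres_sym, vderiv_orth in Heq by auto.
  rewrite (inner_ext_l lo hi _ (fun n => E t * psi t n)) in Heq by (intros; apply eigvec_eq; auto).
  rewrite inner_scal_l, vderiv_orth in Heq by auto.
  unfold qform. rewrite (inner_ext_r lo hi _ _ (mulop lo hi (shifted (Derive v) al t) (psi t)))
    by (intros; rewrite mulop_in; auto).
  lra.
Qed.

Section Bounds.
Variable D0 : R.
Hypothesis v_deriv_bound : forall y, Rabs (Derive v y) <= D0.

Let D0_nonneg : 0 <= D0.
Proof. eapply Rle_trans; [apply Rabs_pos|apply (v_deriv_bound 0)]. Qed.

Let potential_deriv_bound t x : vnorm lo hi (fun n => shifted (Derive v) al t n * x n) <= D0 * vnorm lo hi x.
Proof. apply vnorm_mult_bound; [apply D0_nonneg|intros; apply v_deriv_bound]. Qed.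

Lemma eigval_deriv_bound t : P t -> Rabs (Derive E t) <= D0.
Proof.
  intros Pt. rewrite hellmann_feynman by auto. unfold qform.
  replace D0 with (1 * (D0 * 1)) by ring. apply inner_abs_le.
  - rewrite eigvec_unit; auto; lra.
  - rewrite <- (eigvec_unit t Pt). apply potential_deriv_bound.
Qed.

(* Mean value theorem: E is D0-Lipschitz along segments contained in P. *)
Lemma eigval_lipschitz s t : (forall x, Rmin s t <= x <= Rmax s t -> P x) ->
  Rabs (E t - E s) <= D0 * Rabs (t - s).
Proof.
  intros Hseg.
  destruct (MVT_gen E s t (Derive E)) as [x [Hx Hmvt]].
  - intros x Hx. apply eigval_derive, Hseg. lra.
  - intros x Hx. apply derivable_continuous_pt, ex_derive_Reals_0.
    exists (Derive E x). apply eigval_derive, Hseg; auto.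
  - rewrite Hmvt, Rabs_mult. apply Rmult_le_compat_r; [apply Rabs_pos|].
    apply eigval_deriv_bound, Hseg; auto.
Qed.

Lemma eigvec_deriv_bound t g : P t -> 0 < g -> spectral_gap (H t) lo hi (E t) (psi t) g ->
  vnorm lo hi (vderiv psi t) <= 2 * D0 / g.
Proof.
  intros Pt Hg Hgap.
  assert (G := gap_inequality lo hi (H t) (E t) g (psi t) (fun x y c n => Hres_lin v al ep lo hi t x y c n)
    (fun x n => Hres_out v al ep lo hi t x n) (fun x y => Hres_sym v al ep lo hi t x y)
    (fun n => eigvec_eq t n Pt) (Rlt_le _ _ Hg) Hgap (vderiv psi t) (vderiv_supp t Pt)
    ltac:(rewrite inner_sym; apply vderiv_orth; auto)).
  rewrite (vnorm_ext lo hi (fun n => H t (vderiv psi t) n - E t * vderiv psi t n)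
             (fun n => Derive E t * psi t n - mulop lo hi (shifted (Derive v) al t) (psi t) n))
    in G by (intros n _; pose proof (eigen_eq_derive t n Pt); lra).
  assert (Hr : vnorm lo hi (fun n => Derive E t * psi t n - mulop lo hi (shifted (Derive v) al t) (psi t) n)
               <= D0 * 1 + D0 * 1).
  { eapply Rle_trans; [apply vnorm_sub_le|]. apply Rplus_le_compat.
    - apply vnorm_scal_le; [apply eigval_deriv_bound; auto|rewrite eigvec_unit; auto; lra].
    - rewrite <- (eigvec_unit t Pt), (vnorm_ext lo hi _ (fun n => shifted (Derive v) al t n * psi t n))
        by (intros; apply mulop_in; auto).
      apply potential_deriv_bound. }
  apply (Rmult_le_reg_l g); auto. replace (g * (2 * D0 / g)) with (2 * D0) by (field; lra). lra.
Qed.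
End Bounds.

Lemma eigval_second_derivative t : (forall y, ex_derive (Derive v) y) -> P t ->
  Derive (Derive E) t = 2 * inner lo hi (vderiv psi t) (fun n => shifted (Derive v) al t n * psi t n)
                        + qform lo hi (shifted (Derive (Derive v)) al t) (psi t).
Proof.
  intros Hv2 Pt. rewrite (Derive_ext_loc _ (fun s => qform lo hi (shifted (Derive v) al s) (psi s))).
  - apply is_derive_unique, qform_derive.
    + intros n. apply shifted_derive, Hv2.
    + intros n. apply eigvec_derive; auto.
  - apply (filter_imp P); [|apply P_open; auto]. intros s Ps. apply hellmann_feynman; auto.
Qed.
End RellichCalculus.

Lemma qform_widen a b c d w x : (a <= b)%Z -> (b <= c)%Z -> (c <= d)%Z -> supp b c x ->
  qform a d w x = qform b c w x.
Proof. intros. apply inner_widen; auto. Qed.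

Lemma Derive2_minus (P : R -> Prop) f g t : (forall s, P s -> locally s P) ->
  C2_on P f -> C2_on P g -> P t ->
  Derive (Derive (fun s => f s - g s)) t = Derive (Derive f) t - Derive (Derive g) t.
Proof.
  intros HPo Hf Hg Pt.
  rewrite (Derive_ext_loc (Derive (fun s => f s - g s)) (fun s => Derive f s - Derive g s)).
  - apply Derive_minus; [apply Hf|apply Hg]; auto.
  - apply (filter_imp P); [|apply HPo; auto]. intros s Ps. apply Derive_minus; [apply Hf|apply Hg]; auto.
Qed.

Lemma isolated_gap (A : (Z -> R) -> Z -> R) lo hi mu phi Es r g :
  sqnorm lo hi phi = 1 ->
  (forall x, supp lo hi x -> (forall n, A x n = mu * x n) -> exists k, forall n, x n = k * phi n) ->
  (forall lam y, supp lo hi y -> (exists n, y n <> 0) -> (forall n, A y n = lam * y n) ->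
     Rabs (lam - Es) < r -> lam = mu) ->
  Rabs (mu - Es) + g <= r ->
  spectral_gap A lo hi mu phi g.
Proof.
  intros Hphi Hsimple Huniq Hr lam y Hys [n0 Hn0] Hyp Hye.
  destruct (Rlt_le_dec (Rabs (lam - Es)) r) as [Hl|Hl].
  - exfalso. assert (Hlam : lam = mu) by (apply (Huniq lam y); eauto). subst lam.
    destruct (Hsimple y Hys Hye) as [k Hk].
    rewrite (inner_ext_l lo hi _ (fun n => k * phi n)), inner_scal_l, inner_self, Hphi in Hyp
      by (intros; apply Hk).
    apply Hn0. rewrite Hk. replace k with 0 by lra. ring.
  - revert Hl Hr. split_Rabs; lra.
Qed.

(* Perturbation estimates at a point theta.  (E, psi) is a Rellich pair of the core
   operator H^[b,c] and (Eh, psih) one of the full operator H^[a,d] = H_P + Gamma_P;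
   E(theta) and Eh(theta) are the only eigenvalues of H_P, resp. H^[a,d], near Es, psi is
   nearly an eigenvector of H^[a,d] (small boundary defect Gamma_P psi) and psih is
   close to psi.  These are the assumptions of the Simple Resonance Assumption at
   theta, with |E(theta) - Es| < rho/8 obtained from the Lipschitz bound on E. *)
Section Perturbation.
Variables (v : R -> R) (al ep : R) (a b c d : Z) (D0 : R).
Variables (P : R -> Prop) (E Eh : R -> R) (psi psih : R -> Z -> R) (theta Es rho delta : R).
Hypothesis core_left : (a < b)%Z.
Hypothesis core_nonempty : (b <= c)%Z.
Hypothesis core_right : (c < d)%Z.
Hypothesis v_deriv : forall y, ex_derive v y.
Hypothesis v_deriv2 : forall y, ex_derive (Derive v) y.
Hypothesis v_deriv_bound : forall y, Rabs (Derive v y) <= D0.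
Hypothesis v_deriv2_bound : forall y, Rabs (Derive (Derive v) y) <= D0.
Hypothesis P_open : forall t, P t -> locally t P.
Hypothesis core_pair : RellichPair (Hres v al ep b c) b c P E psi.
Hypothesis full_pair : RellichPair (Hres v al ep a d) a d P Eh psih.
Hypothesis P_theta : P theta.
Hypothesis rho_pos : 0 < rho.
Hypothesis delta_small : delta < rho ^ 3 / 2.
Hypothesis rho_small : rho ^ 3 / 2 < rho / 16.
Hypothesis defect : vnorm a d (GammaP v al ep a b c d theta (psi theta)) <= 2 * delta.
Hypothesis defect_deriv :
  vnorm a d (GammaP v al ep a b c d theta (vderiv psi theta)) <= 25 * D0 * delta / rho.
Hypothesis close : vnorm a d (fun n => psih theta n - psi theta n) <= 3 * delta / rho.
Hypothesis core_unique : forall lam, is_eigval (HP v al ep a b c d theta) a d lam ->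
  Rabs (lam - Es) < 7 * rho / 4 -> lam = E theta.
Hypothesis core_center : Rabs (E theta - Es) < rho / 8.
Hypothesis full_unique : forall lam, is_eigval (Hres v al ep a d theta) a d lam ->
  Rabs (lam - Es) < 3 * rho / 2 -> lam = Eh theta.

Let HJ := Hres v al ep b c theta.
Let HI := Hres v al ep a d theta.
Let dV := shifted (Derive v) al theta.

Let D0_nonneg : 0 <= D0.
Proof. eapply Rle_trans; [apply Rabs_pos|apply (v_deriv_bound 0)]. Qed.

Let delta_nonneg : 0 <= delta.
Proof. pose proof (vnorm_nonneg a d (GammaP v al ep a b c d theta (psi theta))). lra. Qed.

Let rho_lt_1 : rho < 1.
Proof. nra. Qed.

Let close_small : 3 * delta / rho <= 1.
Proof.
  apply (Rmult_le_reg_r rho); auto.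
  replace (3 * delta / rho * rho) with (3 * delta) by (field; lra). nra.
Qed.

Let psi_core_supp : supp b c (psi theta).
Proof. apply (eigvec_supp v al ep b c P E psi core_pair theta P_theta). Qed.

Let psi_unit : vnorm a d (psi theta) = 1.
Proof.
  rewrite (vnorm_widen a b c d) by (auto; lia).
  apply (eigvec_unit v al ep b c P E psi core_pair theta P_theta).
Qed.

Let psih_unit : vnorm a d (psih theta) = 1.
Proof. apply (eigvec_unit v al ep a d P Eh psih full_pair theta P_theta). Qed.

Let psih_eq n : HI (psih theta) n = Eh theta * psih theta n.
Proof. apply (eigvec_eq v al ep a d P Eh psih full_pair theta n P_theta). Qed.

Let psih_supp : supp a d (psih theta).
Proof. apply (eigvec_supp v al ep a d P Eh psih full_pair theta P_theta). Qed.

Let dpsih_supp : supp a d (vderiv psih theta).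
Proof. apply (vderiv_supp v al ep a d P Eh psih P_open full_pair theta P_theta). Qed.

Let dpsi_core_supp : supp b c (vderiv psi theta).
Proof. apply (vderiv_supp v al ep b c P E psi P_open core_pair theta P_theta). Qed.

Let dpsi_supp : supp a d (vderiv psi theta).
Proof. apply (supp_widen a b c d); auto; lia. Qed.

Let HI_core x n : supp b c x -> HI x n = HJ x n + GammaP v al ep a b c d theta x n.
Proof. intros Hx. apply Hres_core_split; auto. Qed.

Let E_deriv_full t : P t -> Derive E t = qform a d (shifted (Derive v) al t) (psi t).
Proof.
  intros Pt. rewrite (hellmann_feynman v al ep b c P E psi v_deriv P_open core_pair t Pt).
  symmetry. apply qform_widen; auto; try lia. apply (eigvec_supp v al ep b c P E psi core_pair t Pt).
Qed.

(* The core eigenvalue is isolated in the spectrum of H_P, so it has spectral gap rho. *)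
Let core_gap : spectral_gap HJ b c (E theta) (psi theta) rho.
Proof.
  apply (isolated_gap HJ b c (E theta) (psi theta) Es (7 * rho / 4) rho); [| | |lra].
  - apply vnorm_unit, (eigvec_unit v al ep b c P E psi core_pair theta P_theta).
  - intros x Hx Hxe. apply (eigvec_simple v al ep b c P E psi core_pair theta x P_theta Hx Hxe).
  - intros lam y Hy Hy0 Hye Hlam. apply core_unique; auto.
    exists y. split; [apply (supp_widen a b c d); auto; lia|]. split; auto.
    intros n. rewrite HP_core; auto.
Qed.

Let dpsi_bound : vnorm a d (vderiv psi theta) <= 2 * D0 / rho.
Proof.
  rewrite (vnorm_widen a b c d) by (auto; lia).
  apply (eigvec_deriv_bound v al ep b c P E psi v_deriv P_open core_pair D0 v_deriv_bound); auto.
Qed.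

(* First order: (Eh - E) <psih, psi> = <psih, Gamma_P psi> and <psih, psi> >= 1/2. *)
Lemma eigval_diff_bound : Rabs (Eh theta - E theta) <= 4 * delta.
Proof.
  set (ip := inner a d (psih theta) (psi theta)).
  assert (Hip : 1 / 2 <= ip).
  { assert (Hsq : sqnorm a d (fun n => psih theta n - psi theta n) = 2 - 2 * ip).
    { rewrite (sqnorm_ext a d _ (fun n => psih theta n + (-1) * psi theta n)) by (intros; ring).
      rewrite sqnorm_expand, (proj1 (vnorm_unit _ _ _) psih_unit), (proj1 (vnorm_unit _ _ _) psi_unit).
      fold ip. ring. }
    rewrite <- vnorm_sq in Hsq. pose proof (vnorm_nonneg a d (fun n => psih theta n - psi theta n)). nra. }
  assert (E1 : inner a d (HI (psih theta)) (psi theta) = Eh theta * ip).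
  { rewrite (inner_ext_l a d _ (fun n => Eh theta * psih theta n)), inner_scal_l by
      (intros; apply psih_eq).
    reflexivity. }
  assert (E2 : inner a d (psih theta) (HI (psi theta))
               = E theta * ip + inner a d (psih theta) (GammaP v al ep a b c d theta (psi theta))).
  { rewrite (inner_ext_r a d _ _ (fun n => E theta * psi theta n + GammaP v al ep a b c d theta (psi theta) n)).
    - rewrite inner_add_r, inner_scal_r. reflexivity.
    - intros n _. rewrite HI_core by auto. unfold HJ.
      rewrite (eigvec_eq v al ep b c P E psi core_pair theta n P_theta). reflexivity. }
  unfold HI in E2. rewrite Hres_sym in E2.
  assert (Hg : Rabs (inner a d (psih theta) (GammaP v al ep a b c d theta (psi theta))) <= 1 * (2 * delta))
    by (apply inner_abs_le; lra).
  replace (inner a d (psih theta) (GammaP v al ep a b c d theta (psi theta)))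
    with ((Eh theta - E theta) * ip) in Hg by (unfold HI in E1; lra).
  rewrite Rabs_mult, (Rabs_pos_eq ip) in Hg by lra.
  pose proof (Rabs_pos (Eh theta - E theta)). nra.
Qed.

(* Derivative of the eigenvalues: |Eh' - E'| <= 2 D0 ||psih - psi||. *)
Lemma eigval_deriv_diff_bound : Rabs (Derive (fun t => Eh t - E t) theta) <= 6 * D0 * delta / rho.
Proof.
  rewrite Derive_minus by (apply (proj1 full_pair) || apply (proj1 core_pair); auto).
  rewrite (hellmann_feynman v al ep a d P Eh psih v_deriv P_open full_pair theta P_theta), E_deriv_full by auto.
  eapply Rle_trans; [apply (qform_diff_bound a d _ _ _ D0); [exact D0_nonneg|intros; apply v_deriv_bound]|].
  rewrite psih_unit, psi_unit.
  replace (6 * D0 * delta / rho) with (3 * delta / rho * (D0 * (1 + 1))) by (field; lra).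
  apply Rmult_le_compat_r; [lra|exact close].
Qed.

(* Since |Eh - Es| < rho/2, the full eigenvalue has spectral gap rho as well. *)
Let full_gap : spectral_gap HI a d (Eh theta) (psih theta) rho.
Proof.
  apply (isolated_gap HI a d (Eh theta) (psih theta) Es (3 * rho / 2) rho).
  - apply vnorm_unit, psih_unit.
  - intros x Hx Hxe. apply (eigvec_simple v al ep a d P Eh psih full_pair theta x P_theta Hx Hxe).
  - intros lam y Hy Hy0 Hye Hlam. apply full_unique; auto. exists y. auto.
  - pose proof eigval_diff_bound. revert core_center H. split_Rabs; nra.
Qed.

(* Derivative of the eigenvectors.  With u = psih' - psi', the vector (HI - Eh) u is
   an explicit defect built from first order quantities. *)
Let u : Z -> R := fun n => vderiv psih theta n - vderiv psi theta n.

Let defect_u : Z -> R := fun n =>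
  (Derive Eh theta - Derive E theta) * psih theta n + Derive E theta * (psih theta n - psi theta n)
  - dV n * (psih theta n - psi theta n) - GammaP v al ep a b c d theta (vderiv psi theta) n
  + (Eh theta - E theta) * vderiv psi theta n.

Let u_equation n : inI a d n -> HI u n - Eh theta * u n = defect_u n.
Proof.
  intros Hn. unfold u, defect_u. unfold HI. rewrite Hres_sub. fold HI.
  pose proof (eigen_eq_derive v al ep a d P Eh psih v_deriv P_open full_pair theta n P_theta) as EI.
  pose proof (eigen_eq_derive v al ep b c P E psi v_deriv P_open core_pair theta n P_theta) as EJ.
  rewrite (HI_core (vderiv psi theta) n dpsi_core_supp).
  rewrite (mulop_widen a b c d) in EJ by (auto; lia).
  fold HI in EI. fold HJ in EJ. fold dV in EI, EJ. rewrite mulop_in in EI, EJ by auto.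
  lra.
Qed.

Let defect_u_bound : vnorm a d defect_u <= 45 * D0 * delta / rho.
Proof.
  assert (B1 : vnorm a d (fun n => (Derive Eh theta - Derive E theta) * psih theta n) <= 6 * D0 * delta / rho * 1).
  { apply vnorm_scal_le; [|lra].
    rewrite <- Derive_minus by (apply (proj1 full_pair) || apply (proj1 core_pair); auto).
    apply eigval_deriv_diff_bound. }
  assert (B2 : vnorm a d (fun n => Derive E theta * (psih theta n - psi theta n)) <= D0 * (3 * delta / rho))
    by (apply vnorm_scal_le; auto;
        apply (eigval_deriv_bound v al ep b c P E psi v_deriv P_open core_pair); auto).
  assert (B3 : vnorm a d (fun n => dV n * (psih theta n - psi theta n)) <= D0 * (3 * delta / rho)).
  { eapply Rle_trans; [apply vnorm_mult_bound; [exact D0_nonneg|intros; apply v_deriv_bound]|].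
    apply Rmult_le_compat_l; auto. }
  assert (B5 : vnorm a d (fun n => (Eh theta - E theta) * vderiv psi theta n) <= 4 * delta * (2 * D0 / rho))
    by (apply vnorm_scal_le; [apply eigval_diff_bound|apply dpsi_bound]).
  unfold defect_u.
  eapply Rle_trans; [apply vnorm_add_le|].
  eapply Rle_trans; [apply Rplus_le_compat_r, vnorm_sub_le|].
  eapply Rle_trans; [apply Rplus_le_compat_r, Rplus_le_compat_r, vnorm_sub_le|].
  eapply Rle_trans; [apply Rplus_le_compat_r, Rplus_le_compat_r, Rplus_le_compat_r, vnorm_add_le|].
  replace (45 * D0 * delta / rho) with
    (6 * D0 * delta / rho * 1 + D0 * (3 * delta / rho) + D0 * (3 * delta / rho) + 25 * D0 * delta / rho
     + 4 * delta * (2 * D0 / rho)) by (field; lra).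
  lra.
Qed.

(* The component of u along psih: <u, psih> = - <psi', psih - psi>. *)
Let u_overlap_bound : Rabs (inner a d u (psih theta)) <= 2 * D0 / rho * (3 * delta / rho).
Proof.
  assert (Horth : inner a d (vderiv psih theta) (psih theta) = 0).
  { rewrite inner_sym. apply (vderiv_orth v al ep a d P Eh psih P_open full_pair theta P_theta). }
  assert (Horth' : inner a d (vderiv psi theta) (psi theta) = 0).
  { rewrite (inner_widen a b c d), inner_sym by (auto; lia).
    apply (vderiv_orth v al ep b c P E psi P_open core_pair theta P_theta). }
  unfold u. rewrite inner_sub_l, Horth.
  replace (inner a d (vderiv psi theta) (psih theta))
    with (inner a d (vderiv psi theta) (fun n => psih theta n - psi theta n))
    by (rewrite inner_sub_r, Horth'; ring).
  rewrite Rminus_0_l, Rabs_Ropp. apply inner_abs_le; auto.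
Qed.

(* Gap inequality for the component of u orthogonal to psih, plus its component along psih. *)
Let u_bound : vnorm a d u <= 51 * D0 * delta / rho ^ 2.
Proof.
  set (beta := inner a d u (psih theta)).
  set (w := fun n => u n + (- beta) * psih theta n).
  assert (Hws : supp a d w).
  { intros n Hn. unfold w, u. rewrite dpsih_supp, dpsi_supp, psih_supp; auto. ring. }
  assert (Hwp : inner a d w (psih theta) = 0).
  { unfold w. rewrite inner_add_l, inner_scal_l, inner_self, (proj1 (vnorm_unit _ _ _) psih_unit). fold beta. ring. }
  assert (G := gap_inequality a d HI (Eh theta) rho (psih theta)
    (fun x y k n => Hres_lin v al ep a d theta x y k n) (fun x n => Hres_out v al ep a d theta x n)
    (fun x y => Hres_sym v al ep a d theta x y) psih_eq (Rlt_le _ _ rho_pos) full_gap w Hws Hwp).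
  rewrite (vnorm_ext a d (fun n => HI w n - Eh theta * w n) defect_u) in G.
  2:{ intros n Hn. rewrite <- (u_equation n Hn). unfold w, HI. rewrite Hres_lin.
      rewrite psih_eq. ring. }
  assert (Hw : vnorm a d w <= 45 * D0 * delta / rho ^ 2).
  { apply (Rmult_le_reg_l rho); auto. replace (rho * (45 * D0 * delta / rho ^ 2)) with (45 * D0 * delta / rho)
      by (field; lra). pose proof defect_u_bound. lra. }
  rewrite (vnorm_ext a d u (fun n => w n + beta * psih theta n)) by (intros; unfold w; ring).
  eapply Rle_trans; [apply vnorm_add_le|].
  assert (vnorm a d (fun n => beta * psih theta n) <= 2 * D0 / rho * (3 * delta / rho) * 1)
    by (apply vnorm_scal_le; [apply u_overlap_bound|lra]).
  replace (51 * D0 * delta / rho ^ 2) with (45 * D0 * delta / rho ^ 2 + 2 * D0 / rho * (3 * delta / rho) * 1)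
    by (field; lra).
  lra.
Qed.

Lemma eigvec_deriv_diff_bound :
  vnorm a d (fun n => Derive (fun t => psih t n - psi t n) theta) <= 51 * D0 * delta / rho ^ 2.
Proof.
  rewrite (vnorm_ext a d _ u); [exact u_bound|].
  intros n _. apply Derive_minus.
  - exists (vderiv psih theta n). apply (eigvec_derive v al ep a d P Eh psih full_pair theta n P_theta).
  - exists (vderiv psi theta n). apply (eigvec_derive v al ep b c P E psi core_pair theta n P_theta).
Qed.

(* Second derivative: Eh'' - E'' = 2 (<u, V' psih> + <psi', V' (psih - psi)>)
   + (<psih, V'' psih> - <psi, V'' psi>). *)
Lemma eigval_second_deriv_diff_bound :
  Rabs (Derive (Derive (fun t => Eh t - E t)) theta) <= 114 * D0 ^ 2 * delta / rho ^ 2 + 6 * D0 * delta / rho.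
Proof.
  rewrite (Derive2_minus P Eh E theta P_open (proj1 full_pair) (proj1 core_pair) P_theta).
  rewrite (eigval_second_derivative v al ep a d P Eh psih v_deriv P_open full_pair theta v_deriv2 P_theta).
  rewrite (eigval_second_derivative v al ep b c P E psi v_deriv P_open core_pair theta v_deriv2 P_theta).
  rewrite <- (inner_widen a b c d), <- (qform_widen a b c d) by (auto; lia).
  fold dV. set (d2V := shifted (Derive (Derive v)) al theta).
  assert (Eq : inner a d (vderiv psih theta) (fun n => dV n * psih theta n)
               - inner a d (vderiv psi theta) (fun n => dV n * psi theta n)
             = inner a d u (fun n => dV n * psih theta n)
               + inner a d (vderiv psi theta) (fun n => dV n * (psih theta n - psi theta n))).
  { unfold u. rewrite inner_sub_l, (inner_ext_r a d _ (fun n => dV n * (psih theta n - psi theta n))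
      (fun n => dV n * psih theta n - dV n * psi theta n)), inner_sub_r by (intros; ring). ring. }
  assert (HA : Rabs (inner a d u (fun n => dV n * psih theta n)) <= 51 * D0 * delta / rho ^ 2 * (D0 * 1)).
  { apply inner_abs_le; [exact u_bound|]. rewrite <- psih_unit.
    apply vnorm_mult_bound; [exact D0_nonneg|intros; apply v_deriv_bound]. }
  assert (HB : Rabs (inner a d (vderiv psi theta) (fun n => dV n * (psih theta n - psi theta n)))
               <= 2 * D0 / rho * (D0 * (3 * delta / rho))).
  { apply inner_abs_le; [exact dpsi_bound|].
    eapply Rle_trans; [apply vnorm_mult_bound; [exact D0_nonneg|intros; apply v_deriv_bound]|].
    apply Rmult_le_compat_l; auto. }
  assert (HQ : Rabs (qform a d d2V (psih theta) - qform a d d2V (psi theta)) <= 3 * delta / rho * (D0 * (1 + 1))).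
  { eapply Rle_trans; [apply (qform_diff_bound a d _ _ _ D0); [exact D0_nonneg|intros; apply v_deriv2_bound]|].
    rewrite psih_unit, psi_unit. apply Rmult_le_compat_r; [lra|exact close]. }
  replace (2 * inner a d (vderiv psih theta) (fun n => dV n * psih theta n) + qform a d d2V (psih theta)
           - (2 * inner a d (vderiv psi theta) (fun n => dV n * psi theta n) + qform a d d2V (psi theta)))
    with (2 * (inner a d u (fun n => dV n * psih theta n)
               + inner a d (vderiv psi theta) (fun n => dV n * (psih theta n - psi theta n)))
          + (qform a d d2V (psih theta) - qform a d d2V (psi theta))) by lra.
  eapply Rle_trans; [apply Rabs_triang|]. rewrite Rabs_mult, Rabs_pos_eq by lra.
  pose proof (Rabs_triang (inner a d u (fun n => dV n * psih theta n))
                          (inner a d (vderiv psi theta) (fun n => dV n * (psih theta n - psi theta n)))).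
  replace (114 * D0 ^ 2 * delta / rho ^ 2 + 6 * D0 * delta / rho)
    with (2 * (51 * D0 * delta / rho ^ 2 * (D0 * 1) + 2 * D0 / rho * (D0 * (3 * delta / rho)))
          + 3 * delta / rho * (D0 * (1 + 1))) by (field; lra).
  lra.
Qed.
Lemma perturbation_estimates :
  let C := 120 * (1 + D0) ^ 2 in
  Rabs (Eh theta - E theta) <= C * delta /\
  Rabs (Derive (fun t => Eh t - E t) theta) <= C * delta / rho /\
  Rabs (Derive (Derive (fun t => Eh t - E t)) theta) <= C * delta / rho ^ 2 /\
  vnorm a d (fun n => psih theta n - psi theta n) <= C * delta / rho /\
  vnorm a d (fun n => Derive (fun t => psih t n - psi t n) theta) <= C * delta / rho ^ 2.
Proof.
  intros C.
  pose proof eigval_diff_bound as H0. pose proof eigval_deriv_diff_bound as H1.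
  pose proof eigval_second_deriv_diff_bound as H2. pose proof eigvec_deriv_diff_bound as H3.
  pose proof close as H4.
  set (X := delta / rho). set (Y := delta / rho ^ 2).
  assert (HX : 0 <= X) by (apply Rdiv_le_0_compat; lra).
  assert (HXY : X <= Y).
  { unfold X, Y. apply Rmult_le_compat_l; [lra|]. apply Rinv_le_contravar; nra. }
  assert (HD2Y : 0 <= D0 ^ 2 * Y) by (apply Rmult_le_pos; nra).
  assert (HC : C = 120 + 240 * D0 + 120 * D0 ^ 2) by (unfold C; ring).
  replace (C * delta / rho) with (C * X) by (unfold X; field; lra).
  replace (C * delta / rho ^ 2) with (C * Y) by (unfold Y; field; lra).
  replace (6 * D0 * delta / rho) with (6 * D0 * X) in H1 by (unfold X; field; lra).
  replace (114 * D0 ^ 2 * delta / rho ^ 2 + 6 * D0 * delta / rho) with (114 * D0 ^ 2 * Y + 6 * D0 * X) in H2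
    by (unfold X, Y; field; lra).
  replace (51 * D0 * delta / rho ^ 2) with (51 * D0 * Y) in H3 by (unfold Y; field; lra).
  replace (3 * delta / rho) with (3 * X) in H4 by (unfold X; field; lra).
  rewrite HC. pose proof D0_nonneg.
  split; [|split; [|split; [|split]]]; nra.
Qed.
End Perturbation.

Lemma ball_open (ts r t : R) : Rabs (t - ts) < r -> locally t (fun s => Rabs (s - ts) < r).
Proof.
  intros H. assert (Hp : 0 < r - Rabs (t - ts)) by lra.
  exists (mkposreal _ Hp). intros y Hy. simpl in Hy.
  unfold ball in Hy; simpl in Hy. unfold AbsRing_ball, abs, minus, plus, opp in Hy; simpl in Hy.
  replace (y - ts) with ((y + - t) + (t - ts)) by ring.
  eapply Rle_lt_trans; [apply Rabs_triang|]. lra.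
Qed.

Lemma eigval_ball_variation v al ep lo hi E psi D0 ts r t :
  0 < D0 -> (forall y, ex_derive v y) -> (forall y, Rabs (Derive v y) <= D0) ->
  RellichPair (Hres v al ep lo hi) lo hi (fun s => Rabs (s - ts) < r) E psi ->
  Rabs (t - ts) < r -> Rabs (E t - E ts) < D0 * r.
Proof.
  intros HD0 Hv HD RP Ht.
  eapply Rle_lt_trans.
  - apply (eigval_lipschitz v al ep lo hi _ E psi Hv (fun s Hs => ball_open ts r s Hs) RP D0 HD ts t).
    intros x Hx. unfold Rmin, Rmax in Hx. destruct (Rle_dec ts t); split_Rabs; lra.
  - apply Rmult_lt_compat_l; auto.
Qed.

Theorem proposition2p2 :
  forall D0 : R, 0 < D0 ->
  exists C : R,
  forall (v : R -> R) (alpha eps : R) (thetas Es : R)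
         (a b c d : Z) (delta rho gamma ell : R)
         (Ef : R -> R) (psi : R -> Z -> R)
         (Eh : R -> R) (psih : R -> Z -> R),
  (forall x, v (x + 1) = v x) ->
  (forall x, -1 <= v x <= 1) ->
  (forall x, ex_derive v x /\ ex_derive (Derive v) x /\ continuous (Derive (Derive v)) x) ->
  (forall x y, Rabs (Derive v x) + Rabs (Derive (Derive v) y) <= D0) ->
  (forall p q : Z, q <> 0%Z -> alpha <> IZR p / IZR q) ->
  0 < eps < 1 / 7 ->
  -2 <= Es <= 2 ->
  (a < b)%Z -> (b <= c)%Z -> (c < d)%Z ->
  0 < rho -> delta < rho ^ 3 / 2 -> rho ^ 3 / 2 < rho / 16 ->
  ln 7 < gamma -> gamma <= Rabs (ln eps) -> 0 < ell ->
  let ball := fun t => Rabs (t - thetas) < rho / (8 * D0) in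
  let H := Hres v alpha eps in
  RellichPair (H b c) b c ball Ef psi -> Ef thetas = Es ->
  (forall theta, ball theta ->
    vnorm a d (GammaP v alpha eps a b c d theta (psi theta)) <= 2 * delta /\
    (forall lam x, supp a d x -> vnorm a d x = 1 ->
       (forall n, H a d theta x n = lam * x n) -> Rabs (lam - Es) < 3 * rho / 2 ->
       vnorm a d (GammaP v alpha eps a b c d theta x) <= 4 * delta) /\
    (forall E, Rabs (E - Es) < 3 * rho / 2 ->
       green_decay v alpha eps a (b - 1) theta E gamma ell /\
       green_decay v alpha eps (c + 1) d theta E gamma ell) /\
    is_eigval (HP v alpha eps a b c d theta) a d (Ef theta) /\
    (forall lam, is_eigval (HP v alpha eps a b c d theta) a d lam ->
       Rabs (lam - Es) < 7 * rho / 4 -> lam = Ef theta) /\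
    (forall E, Rabs (E - Es) < 3 * rho / 2 ->
       Rperp_norm_le (HP v alpha eps a b c d theta) a d (Ef theta) E (4 / rho)) /\
    vnorm a d (GammaP v alpha eps a b c d theta
                 (fun n => Derive (fun t => psi t n) theta)) <= 25 * D0 * delta / rho) ->
  RellichPair (H a d) a d ball Eh psih ->
  (forall theta, ball theta ->
     Rabs (Eh theta - Es) < 3 * rho / 2 /\
     (forall lam, is_eigval (H a d theta) a d lam -> Rabs (lam - Es) < 3 * rho / 2 ->
        lam = Eh theta) /\
     vnorm a d (fun n => psih theta n - psi theta n) <= 3 * delta / rho) ->
  forall theta, ball theta ->
    Rabs (Eh theta - Ef theta) <= C * delta /\
    Rabs (Derive (fun t => Eh t - Ef t) theta) <= C * delta / rho /\
    Rabs (Derive (Derive (fun t => Eh t - Ef t)) theta) <= C * delta / rho ^ 2 /\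
    vnorm a d (fun n => psih theta n - psi theta n) <= C * delta / rho /\
    vnorm a d (fun n => Derive (fun t => psih t n - psi t n) theta) <= C * delta / rho ^ 2.
Proof.
  intros D0 HD0. exists (120 * (1 + D0) ^ 2).
  intros v alpha eps thetas Es a b c d delta rho gamma ell Ef psi Eh psih
    _ _ Hv HD _ _ _ Hab Hbc Hcd Hrho Hdelta Hrho3 _ _ _ ball H RPJ HEs Hcore RPI Hfull theta Hth.
  destruct (Hcore theta Hth) as [Hdef [_ [_ [_ [Hcore_uniq [_ Hdef']]]]]].
  destruct (Hfull theta Hth) as [_ [Hfull_uniq Hclose]].
  assert (HD1 : forall y, Rabs (Derive v y) <= D0)
    by (intros y; pose proof (HD y 0); pose proof (Rabs_pos (Derive (Derive v) 0)); lra).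
  assert (HD2 : forall y, Rabs (Derive (Derive v) y) <= D0)
    by (intros y; pose proof (HD 0 y); pose proof (Rabs_pos (Derive v 0)); lra).
  assert (Hcenter : Rabs (Ef theta - Es) < rho / 8).
  { rewrite <- HEs. replace (rho / 8) with (D0 * (rho / (8 * D0))) by (field; lra).
    apply (eigval_ball_variation v alpha eps b c Ef psi D0 thetas _ theta); auto. apply Hv. }
  exact (perturbation_estimates v alpha eps a b c d D0 ball Ef Eh psi psih theta Es rho delta
    Hab Hbc Hcd (fun y => proj1 (Hv y)) (fun y => proj1 (proj2 (Hv y))) HD1 HD2
    (fun t Ht => ball_open thetas _ t Ht) RPJ RPI Hth Hrho Hdelta Hrho3 Hdef Hdef' Hclose
    Hcore_uniq Hcenter Hfull_uniq).
Qed.
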